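(* Let $a,b\in\mathbb{R}^2$, $a\neq b$. For every $\varepsilon_0>0$ there exists $\varepsilon_1>0$ such that the following holds. Let $\Omega\subset\mathbb{R}^2$ be a bounded simply connected domain whose boundary consists of the straight segment from $a$ to $b$ together with a rectifiable curve from $b$ to $a$. If $$|\partial\Omega|\le(1+\varepsilon_1)\,2\|a-b\|,$$ then $$|\Omega|\le\frac{1+\varepsilon_0}{\sqrt6}\,\|a-b\|^{3/2}\sqrt{|\partial\Omega|-2\|a-b\|}.$$
   Context: $|\partial\Omega|$ denotes the length of the boundary of $\Omega$, $|\Omega|$ its area, and $\|\cdot\|$ the Euclidean norm. *)

From Stdlib Require Import Reals Lra.
Open Scope R_scope.

Definition pt := (R * R)%type.

Definition dist2 (p q : pt) : R :=
  sqrt ((fst p - fst q)^2 + (snd p - snd q)^2).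

Definition segment (a b : pt) (x : pt) : Prop :=
  exists t, 0 <= t <= 1 /\
    x = (fst a + t * (fst b - fst a), snd a + t * (snd b - snd a)).

Definition open_set (S : pt -> Prop) : Prop :=
  forall x, S x -> exists r, 0 < r /\ forall y, dist2 x y < r -> S y.

Definition bounded_set (S : pt -> Prop) : Prop :=
  exists M, forall x, S x -> dist2 x (0,0) <= M.

Definition connected_set (S : pt -> Prop) : Prop :=
  ~ exists U V : pt -> Prop, open_set U /\ open_set V /\
      (forall x, S x -> U x \/ V x) /\
      (exists x, S x /\ U x) /\ (exists x, S x /\ V x) /\
      (forall x, S x -> U x -> V x -> False).

Definition in_boundary (S : pt -> Prop) (x : pt) : Prop :=
  forall r, 0 < r -> (exists y, dist2 x y < r /\ S y) /\
                     (exists y, dist2 x y < r /\ ~ S y).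

Definition continuous_path (g : R -> pt) : Prop :=
  forall t, 0 <= t <= 1 -> forall e, 0 < e -> exists d, 0 < d /\
    forall s, 0 <= s <= 1 -> Rabs (s - t) < d -> dist2 (g s) (g t) < e.

Definition continuous_square (H : R -> R -> pt) : Prop :=
  forall t s, 0 <= t <= 1 -> 0 <= s <= 1 -> forall e, 0 < e ->
    exists d, 0 < d /\ forall t' s', 0 <= t' <= 1 -> 0 <= s' <= 1 ->
      Rabs (t' - t) < d -> Rabs (s' - s) < d -> dist2 (H t' s') (H t s) < e.

(* simply connected: every closed loop in S is null-homotopic in S
   (free homotopy through loops to a constant loop) *)
Definition simply_connected (S : pt -> Prop) : Prop :=
  forall c : R -> pt, continuous_path c -> c 0 = c 1 ->
    (forall s, 0 <= s <= 1 -> S (c s)) ->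
    exists H : R -> R -> pt, continuous_square H /\
      (forall s, 0 <= s <= 1 -> H 0 s = c s) /\
      (forall s, 0 <= s <= 1 -> H 1 s = H 1 0) /\
      (forall t, 0 <= t <= 1 -> H t 0 = H t 1) /\
      (forall t s, 0 <= t <= 1 -> 0 <= s <= 1 -> S (H t s)).

Definition domain (S : pt -> Prop) : Prop :=
  (exists x, S x) /\ open_set S /\ connected_set S.

Definition is_partition (t : nat -> R) (n : nat) : Prop :=
  (0 < n)%nat /\ t 0%nat = 0 /\ t n = 1 /\
  forall i, (i < n)%nat -> t i <= t (S i).

Definition poly_length (g : R -> pt) (t : nat -> R) (n : nat) : R :=
  sum_f_R0 (fun i => dist2 (g (t i)) (g (t (S i)))) (n - 1).

Definition curve_length (g : R -> pt) (L : R) : Prop :=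
  is_lub (fun s => exists t n, is_partition t n /\ s = poly_length g t n) L.

(* Lebesgue outer measure of S is <= M : for every eta > 0, S is covered by
   countably many axis-parallel rectangles of total area <= M + eta *)
Definition rect_area (r : R * R * R * R) : R :=
  let '(x1, x2, y1, y2) := r in (x2 - x1) * (y2 - y1).

Definition in_rect (r : R * R * R * R) (p : pt) : Prop :=
  let '(x1, x2, y1, y2) := r in
  x1 <= fst p <= x2 /\ y1 <= snd p <= y2.

Definition area_le (S : pt -> Prop) (M : R) : Prop :=
  forall eta, 0 < eta -> exists (rs : nat -> R * R * R * R) (l : R),
    (forall k, let '(x1, x2, y1, y2) := rs k in x1 <= x2 /\ y1 <= y2) /\
    (forall p, S p -> exists k, in_rect (rs k) p) /\
    infinite_sum (fun k => rect_area (rs k)) l /\ l <= M + eta.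

From Pilot Require Import Defs.
From Stdlib Require Import Reals Rgeom Lra Lia Psatz List.
From Stdlib Require Import Classical ClassicalEpsilon FunctionalExtensionality.
Open Scope R_scope.

(* Rotate so that the chord [ab] becomes the first axis and inscribe in the curve a polygon
   with vertices (u_i, v_i), v_0 = v_n = 0, of length Lam <= L and excess
   X = Lam - sum |u_(i+1) - u_i| <= L - |ab|.  Summation by parts writes the area between the
   polygon and the axis as sum (|v_(i+1)| - |v_i|) c_i with |c_i| <= Lam / 2, and AM-GM together
   with (v_(i+1) - v_i)^2 <= 2 l_i x_i bounds it by X / lam + lam Lam^3 / 24, hence by
   sqrt (X Lam^3 / 6) ~ |ab|^(3/2) sqrt (L - |ab|) / sqrt 6 when L is close to |ab|.

   To compare with the outer measure of Omega, every point of Omega is joined vertically to the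
   line ab inside the "shadow" of a thin tube around one edge of the polygon (the curve stays in
   ellipses around the edges, of summably small widths), and each shadow is covered by finitely
   many rectangles of total area close to the vertical trapezoid under the edge.  Measuring
   trapezoids vertically rather than perpendicularly to ab costs |slope| (L - |ab|) L, which is
   o(sqrt (L - |ab|)).  A vertical chord is reduced to this case by exchanging coordinates. *)

Lemma Rabs_le_bounds (x a : R) : Rabs x <= a -> - a <= x <= a.
Proof. unfold Rabs; destruct (Rcase_abs x); lra. Qed.

Lemma Rabs_le_of_sqr_le (z r : R) : 0 <= r -> z * z <= r * r -> Rabs z <= r.
Proof.
  intros Hr H. rewrite <- (Rabs_pos_eq r Hr). apply Rsqr_le_abs_0. exact H.
Qed.

Lemma le_of_sqr_le (p y : R) : 0 <= y -> p * p <= y * y -> p <= y.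
Proof. intros Hy H. apply Rsqr_incr_0_var; auto. Qed.

Lemma Rdiv_ge0 (a b : R) : 0 <= a -> 0 < b -> 0 <= a / b.
Proof. intros. unfold Rdiv. apply Rmult_le_pos; auto. left; apply Rinv_0_lt_compat; auto. Qed.

Lemma le_amgm (p x l lam : R) : 0 <= x -> 0 <= l -> 0 < lam -> p * p <= 2 * l * x ->
  p <= x / lam + lam * l / 2.
Proof.
  intros Hx Hl Hlam H. apply le_of_sqr_le.
  - pose proof (Rdiv_ge0 x lam Hx Hlam). pose proof (Rmult_le_pos lam l ltac:(lra) Hl). lra.
  - assert (x / lam * (lam * l / 2) = x * l / 2) by (field; lra).
    pose proof (Rle_0_sqr (x / lam - lam * l / 2)). unfold Rsqr in *. lra.
Qed.

Lemma dist2_ge0 (p q : pt) : 0 <= dist2 p q.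
Proof. apply sqrt_pos. Qed.

Lemma dist2_sqr (p q : pt) :
  dist2 p q * dist2 p q = (fst p - fst q) ^ 2 + (snd p - snd q) ^ 2.
Proof. apply sqrt_sqrt. pose proof (pow2_ge_0 (fst p - fst q)). pose proof (pow2_ge_0 (snd p - snd q)). lra. Qed.

Lemma dist2C (p q : pt) : dist2 p q = dist2 q p.
Proof. unfold dist2; f_equal; ring. Qed.

Lemma dist2_xx (p : pt) : dist2 p p = 0.
Proof. unfold dist2. rewrite <- sqrt_0. f_equal. ring. Qed.

Lemma Rabs_coord_le_dist2 (p q : pt) :
  Rabs (fst p - fst q) <= dist2 p q /\ Rabs (snd p - snd q) <= dist2 p q.
Proof.
  rewrite <- (Rabs_pos_eq (dist2 p q)) by apply dist2_ge0.
  apply triangle_rectangle_le. unfold Rsqr. rewrite dist2_sqr. simpl. lra.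
Qed.

Lemma Rabs_fst_le_dist2 (p q : pt) : Rabs (fst p - fst q) <= dist2 p q.
Proof. apply Rabs_coord_le_dist2. Qed.

Lemma Rabs_snd_le_dist2 (p q : pt) : Rabs (snd p - snd q) <= dist2 p q.
Proof. apply Rabs_coord_le_dist2. Qed.

Lemma dist2_triangle (p q r : pt) : dist2 p r <= dist2 p q + dist2 q r.
Proof.
  pose proof (triangle (fst p) (snd p) (fst r) (snd r) (fst q) (snd q)) as H.
  unfold dist_euc in H. rewrite !Rsqr_pow2 in H. exact H.
Qed.

Lemma dist2_vertical (x y z : R) : dist2 (x, y) (x, z) = Rabs (y - z).
Proof. unfold dist2; simpl. rewrite <- sqrt_Rsqr_abs. f_equal. unfold Rsqr. ring. Qed.

(* [rsum f n = f 0 + ... + f (n - 1)]; unlike [sum_f_R0] there is no off-by-one. *)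
Fixpoint rsum (f : nat -> R) (n : nat) : R :=
  match n with O => 0 | S k => rsum f k + f k end.

Lemma rsum_ext (f g : nat -> R) (n : nat) :
  (forall i, (i < n)%nat -> f i = g i) -> rsum f n = rsum g n.
Proof. induction n; intros H; simpl; auto. rewrite IHn, H; auto; intros; apply H; lia. Qed.

Lemma rsum_le (f g : nat -> R) (n : nat) :
  (forall i, (i < n)%nat -> f i <= g i) -> rsum f n <= rsum g n.
Proof.
  induction n; intros H; simpl; [lra|].
  pose proof (IHn (fun i Hi => H i ltac:(lia))). pose proof (H n ltac:(lia)). lra.
Qed.

Lemma rsum_plus (f g : nat -> R) (n : nat) : rsum (fun i => f i + g i) n = rsum f n + rsum g n.
Proof. induction n; simpl; lra. Qed.

Lemma rsum_minus (f g : nat -> R) (n : nat) : rsum (fun i => f i - g i) n = rsum f n - rsum g n.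
Proof. induction n; simpl; lra. Qed.

Lemma rsum_scal (c : R) (f : nat -> R) (n : nat) : rsum (fun i => c * f i) n = c * rsum f n.
Proof. induction n; simpl; [ring|]. rewrite IHn. ring. Qed.

Lemma rsum_const (c : R) (n : nat) : rsum (fun _ => c) n = INR n * c.
Proof. induction n; cbn [rsum]; [simpl; ring|]. rewrite IHn, S_INR. ring. Qed.

Lemma rsum_ge0 (f : nat -> R) (n : nat) : (forall i, (i < n)%nat -> 0 <= f i) -> 0 <= rsum f n.
Proof. intros H. pose proof (rsum_le (fun _ => 0) f n H). rewrite rsum_const in H0. lra. Qed.

Lemma rsum_term_le (f : nat -> R) (n i : nat) :
  (forall j, (j < n)%nat -> 0 <= f j) -> (i < n)%nat -> f i <= rsum f n.
Proof.
  induction n; intros H Hi; [lia|]. simpl.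
  pose proof (H n ltac:(lia)).
  destruct (Nat.eq_dec i n) as [->|].
  - pose proof (rsum_ge0 f n (fun j Hj => H j ltac:(lia))). lra.
  - pose proof (IHn (fun j Hj => H j ltac:(lia)) ltac:(lia)). lra.
Qed.

Lemma rsum_le_mono (f : nat -> R) (m n : nat) :
  (forall j, 0 <= f j) -> (m <= n)%nat -> rsum f m <= rsum f n.
Proof.
  intros H Hmn. induction Hmn; [lra|]. simpl. pose proof (H m0). lra.
Qed.

Lemma rsum_telescope (f : nat -> R) (n : nat) : rsum (fun i => f (S i) - f i) n = f n - f O.
Proof. induction n; simpl; [ring|]. rewrite IHn. ring. Qed.

Lemma Rabs_rsum_le (f : nat -> R) (n : nat) : Rabs (rsum f n) <= rsum (fun i => Rabs (f i)) n.
Proof.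
  induction n; simpl. { rewrite Rabs_R0; lra. }
  eapply Rle_trans; [apply Rabs_triang | lra].
Qed.

Lemma rsum_pairs (f : nat -> R) (n : nat) :
  rsum f (2 * n) = rsum (fun i => f (2 * i)%nat + f (S (2 * i))) n.
Proof.
  induction n; [reflexivity|].
  replace (2 * S n)%nat with (S (S (2 * n))) by lia. cbn [rsum]. rewrite IHn. lra.
Qed.

Lemma rsum_INR (n : nat) : rsum INR n = INR n * (INR n - 1) / 2.
Proof. induction n; cbn [rsum]; [simpl; lra|]. rewrite IHn, S_INR. field. Qed.

Lemma rsum_shift (f : nat -> R) (n : nat) : rsum f (S n) = f O + rsum (fun k => f (S k)) n.
Proof. induction n; cbn [rsum] in *; [ring|]. rewrite IHn. ring. Qed.

Lemma sum_f_R0_rsum (f : nat -> R) (k : nat) : sum_f_R0 f k = rsum f (S k).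
Proof. induction k; cbn [rsum sum_f_R0]; [ring|]. rewrite IHk. cbn [rsum]. ring. Qed.

(** * Finite covers by rectangles *)

Definition rect_wf (r : R * R * R * R) : Prop :=
  let '(x1, x2, y1, y2) := r in x1 <= x2 /\ y1 <= y2.

Fixpoint total_area (l : list (R * R * R * R)) : R :=
  match l with nil => 0 | r :: l' => rect_area r + total_area l' end.

Definition covers (l : list (R * R * R * R)) (S : pt -> Prop) : Prop :=
  (forall r, In r l -> rect_wf r) /\ (forall p, S p -> exists r, In r l /\ in_rect r p).

Definition rect0 : R * R * R * R := (0, 0, 0, 0).

Lemma rsum_nth_area (l : list (R * R * R * R)) (N : nat) : (length l <= N)%nat ->
  rsum (fun k => rect_area (nth k l rect0)) N = total_area l.
Proof.
  revert N; induction l as [|r l IHl]; intros N HN.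
  - simpl. rewrite (rsum_ext _ (fun _ => 0)), rsum_const by (intros [|] _; simpl; ring). ring.
  - destruct N as [|N]; simpl in HN; [lia|].
    rewrite rsum_shift. simpl. rewrite IHl by lia. reflexivity.
Qed.

Lemma area_le_of_covers (S : pt -> Prop) (M : R) :
  (forall eta, 0 < eta -> exists l, covers l S /\ total_area l <= M + eta) -> area_le S M.
Proof.
  intros H eta Heta. destruct (H eta Heta) as [l [[Hwf Hcov] Hs]].
  exists (fun k => nth k l rect0), (total_area l). split; [|split; [|split]].
  - intros k. destruct (nth_in_or_default k l rect0) as [Hin|Hd].
    + exact (Hwf _ Hin).
    + rewrite Hd. simpl. lra.
  - intros p Hp. destruct (Hcov p Hp) as [r [Hin Hr]].
    destruct (In_nth l r rect0 Hin) as [k [_ Hk]]. exists k. rewrite Hk. exact Hr.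
  - intros e He. exists (length l). intros n Hn.
    rewrite sum_f_R0_rsum, rsum_nth_area by lia.
    unfold R_dist. rewrite Rminus_diag, Rabs_R0. lra.
  - exact Hs.
Qed.

Lemma area_le_le (S : pt -> Prop) (M M' : R) : area_le S M -> M <= M' -> area_le S M'.
Proof.
  intros H HM eta He. destruct (H eta He) as [rs [l [H1 [H2 [H3 H4]]]]].
  exists rs, l. repeat split; auto. lra.
Qed.

Lemma covers_sub (l : list (R * R * R * R)) (S S' : pt -> Prop) :
  covers l S -> (forall p, S' p -> S p) -> covers l S'.
Proof. intros [Hwf Hc] H. split; auto. Qed.

Lemma covers_rect (r : R * R * R * R) (S : pt -> Prop) :
  rect_wf r -> (forall p, S p -> in_rect r p) -> covers (r :: nil) S.
Proof.
  intros Hwf Hr. split.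
  - intros r' [<-|[]]; auto.
  - intros p Hp. exists r. split; [left|]; auto.
Qed.

Lemma covers_bigcup (S : nat -> pt -> Prop) (c : nat -> R) (n : nat) :
  (forall i, (i < n)%nat -> exists l, covers l (S i) /\ total_area l <= c i) ->
  exists l, covers l (fun p => exists i, (i < n)%nat /\ S i p) /\ total_area l <= rsum c n.
Proof.
  induction n as [|n IHn]; intros H.
  - exists nil. repeat split.
    + intros r [].
    + intros p [i [Hi _]]. lia.
    + simpl. lra.
  - destruct IHn as [l1 [[Hwf1 Hc1] H1]]; [intros; apply H; lia|].
    destruct (H n ltac:(lia)) as [l2 [[Hwf2 Hc2] H2]].
    assert (Harea : total_area (l1 ++ l2) = total_area l1 + total_area l2).
    { clear. induction l1; simpl; [ring|]. rewrite IHl1. ring. }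
    exists (l1 ++ l2). split; [split|].
    + intros r Hr. apply in_app_or in Hr. destruct Hr; auto.
    + intros p [i [Hi Hp]]. destruct (Nat.eq_dec i n) as [->|Hne].
      * destruct (Hc2 p Hp) as [r [? ?]]. exists r. split; auto. apply in_or_app; auto.
      * destruct (Hc1 p) as [r [? ?]]; [exists i; split; [lia|auto]|].
        exists r. split; auto. apply in_or_app; auto.
    + rewrite Harea. simpl. lra.
Qed.

Lemma is_lub_approx (E : R -> Prop) (m s : R) : is_lub E m -> s < m -> exists y, E y /\ s < y.
Proof.
  intros [Hub Hlub] Hs. apply NNPP. intros Hno.
  assert (is_upper_bound E s).
  { intros y Hy. apply Rnot_lt_le. intros Hsy. apply Hno. exists y. auto. }
  pose proof (Hlub s H). lra.
Qed.

Lemma vertical_ray_exit (Om : pt -> Prop) (x : pt) (e : R) :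
  Defs.open_set Om -> bounded_set Om -> Om x -> e = 1 \/ e = -1 ->
  exists s, 0 < s /\ in_boundary Om (fst x, snd x + e * s).
Proof.
  intros Hop [M HM] Hx He.
  assert (He1 : Rabs e = 1) by (destruct He as [-> | ->]; [apply Rabs_R1 | rewrite Rabs_left; lra]).
  set (ray := fun s => (fst x, snd x + e * s)).
  assert (Hd : forall s1 s2, dist2 (ray s1) (ray s2) = Rabs (s1 - s2)).
  { intros. unfold ray. rewrite dist2_vertical.
    replace (snd x + e * s1 - (snd x + e * s2)) with (e * (s1 - s2)) by ring.
    rewrite Rabs_mult, He1. ring. }
  assert (Hx0 : ray 0 = x) by (unfold ray; destruct x; simpl; f_equal; ring).
  set (E := fun s => 0 <= s /\ forall sg, 0 <= sg <= s -> Om (ray sg)).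
  assert (HE0 : E 0).
  { split; [lra|]. intros sg Hsg. replace sg with 0 by lra. rewrite Hx0. exact Hx. }
  assert (HEb : bound E).
  { exists (M + dist2 (0, 0) x). intros s [Hs0 Hs].
    pose proof (dist2_triangle (ray s) (0, 0) (ray 0)). rewrite Hd, Hx0, Rminus_0_r, Rabs_pos_eq in H by lra.
    pose proof (HM _ (Hs s ltac:(lra))). lra. }
  destruct (completeness E HEb (ex_intro _ 0 HE0)) as [m Hm].
  destruct (Hop x Hx) as [r [Hr Hball]].
  assert (Hrm : r / 2 <= m).
  { apply (proj1 Hm). split; [lra|]. intros sg Hsg. apply Hball.
    rewrite <- Hx0 at 1. rewrite Hd, Rabs_left1 by lra. lra. }
  assert (Hin : forall sg, 0 <= sg < m -> Om (ray sg)).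
  { intros sg Hsg. destruct (is_lub_approx E m sg Hm ltac:(lra)) as [y [[_ Hy] Hsy]]. apply Hy. lra. }
  assert (Hout : ~ Om (ray m)).
  { intros Hy. destruct (Hop _ Hy) as [rho [Hrho Hb]].
    assert (E (m + rho / 2)).
    { split; [lra|]. intros sg Hsg. destruct (Rlt_le_dec sg m); [apply Hin; lra|].
      apply Hb. rewrite Hd, Rabs_left1 by lra. lra. }
    pose proof (proj1 Hm _ H). lra. }
  exists m. split; [lra|]. change (in_boundary Om (ray m)). intros rr Hrr. split.
  - exists (ray (Rmax 0 (m - rr / 2))). split.
    + rewrite Hd. unfold Rmax; destruct (Rle_dec 0 (m - rr / 2)); rewrite Rabs_right by lra; lra.
    + apply Hin. unfold Rmax; destruct (Rle_dec 0 (m - rr / 2)); lra.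
  - exists (ray m). split; auto. rewrite Hd, Rminus_diag, Rabs_R0. lra.
Qed.

(** * Inscribed polygons *)

Lemma partition_range (t : nat -> R) (n : nat) :
  is_partition t n -> forall i, (i <= n)%nat -> 0 <= t i <= 1.
Proof.
  intros [Hn [H0 [H1 Hmono]]].
  assert (Hup : forall i, (i <= n)%nat -> 0 <= t i).
  { induction i; intros Hi; [lra|]. pose proof (Hmono i ltac:(lia)). pose proof (IHi ltac:(lia)). lra. }
  assert (Hdn : forall k, (k <= n)%nat -> t (n - k)%nat <= 1).
  { induction k; intros Hk; [rewrite Nat.sub_0_r; lra|].
    pose proof (Hmono (n - S k)%nat ltac:(lia)). replace (S (n - S k)) with (n - k)%nat in H by lia.
    pose proof (IHk ltac:(lia)). lra. }
  intros i Hi. split; auto. replace i with (n - (n - i))%nat by lia. apply Hdn. lia.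
Qed.

Lemma partition_interval (t : nat -> R) (n : nat) :
  is_partition t n -> forall s, 0 <= s <= 1 -> exists i, (i < n)%nat /\ t i <= s <= t (S i).
Proof.
  intros [Hn [H0 [H1 _]]] s Hs.
  assert (H : forall k, (1 <= k <= n)%nat -> s <= t k -> exists i, (i < k)%nat /\ t i <= s <= t (S i)).
  { induction k; intros Hk Hsk; [lia|]. destruct (Nat.eq_dec k 0) as [->|].
    - exists O. split; [lia|lra].
    - destruct (Rle_dec s (t k)) as [Hle|Hgt].
      + destruct (IHk ltac:(lia) Hle) as [i [Hi Hi']]. exists i. split; auto; lia.
      + exists k. split; [lia|lra]. }
  destruct (H n ltac:(lia) ltac:(lra)) as [i [? ?]]. exists i; auto.
Qed.

Definition inscribed_length (g : R -> pt) (t : nat -> R) (n : nat) : R :=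
  rsum (fun i => dist2 (g (t i)) (g (t (S i)))) n.

Section CurveLength.
Variables (g : R -> pt) (L : R).
Hypothesis HL : curve_length g L.

Lemma inscribed_length_le (t : nat -> R) (n : nat) : is_partition t n -> inscribed_length g t n <= L.
Proof.
  intros Hp. apply (proj1 HL). exists t, n. split; auto.
  unfold poly_length, inscribed_length. rewrite sum_f_R0_rsum. destruct Hp. f_equal. lia.
Qed.

Lemma inscribed_length_near (eta : R) : 0 < eta ->
  exists t n, is_partition t n /\ L - eta < inscribed_length g t n.
Proof.
  intros He. destruct (is_lub_approx _ L (L - eta) HL ltac:(lra)) as [y [[t [n [Hp ->]]] Hy]].
  exists t, n. split; auto. unfold poly_length, inscribed_length in *.
  rewrite sum_f_R0_rsum in Hy. destruct Hp. replace (S (n - 1)) with n in Hy by lia. exact Hy.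
Qed.

Lemma broken_chord_le_length (s : R) : 0 <= s <= 1 -> dist2 (g 0) (g s) + dist2 (g s) (g 1) <= L.
Proof.
  intros Hs. set (t := fun j : nat => match j with O => 0 | S O => s | _ => 1 end).
  assert (Hp : is_partition t 2).
  { repeat split; [lia | ]. intros [|[|]] Hi; simpl; lra || lia. }
  pose proof (inscribed_length_le t 2 Hp). unfold inscribed_length in H. simpl in H. lra.
Qed.

Lemma dist2_ends_le : dist2 (g 0) (g 1) <= L.
Proof.
  pose proof (broken_chord_le_length 0 ltac:(lra)). rewrite dist2_xx in H. lra.
Qed.

Lemma dist2_to_end_le (s : R) : 0 <= s <= 1 -> dist2 (g s) (g 1) <= L.
Proof. intros Hs. pose proof (broken_chord_le_length s Hs). pose proof (dist2_ge0 (g 0) (g s)). lra. Qed.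

(* Inserting one point [s i] into every piece of a partition gives a finer partition. *)
Lemma refined_length_le (t : nat -> R) (n : nat) (s : nat -> R) : is_partition t n ->
  (forall i, (i < n)%nat -> t i <= s i <= t (S i)) ->
  rsum (fun i => dist2 (g (t i)) (g (s i)) + dist2 (g (s i)) (g (t (S i)))) n <= L.
Proof.
  intros [Hn [H0 [H1 Hmono]]] Hs.
  set (t' := fun j => if Nat.even j then t (Nat.div2 j) else s (Nat.div2 j)).
  assert (E1 : forall i, t' (2 * i)%nat = t i).
  { intros. unfold t'. rewrite Nat.even_even, Nat.div2_double. auto. }
  assert (E2 : forall i, t' (S (2 * i)) = s i).
  { intros. unfold t'. replace (S (2 * i)) with (2 * i + 1)%nat by lia.
    rewrite Nat.even_odd, Nat.div2_odd'. auto. }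
  assert (E3 : forall i, t' (S (S (2 * i))) = t (S i)).
  { intros. replace (S (S (2 * i))) with (2 * S i)%nat by lia. apply E1. }
  assert (Hp' : is_partition t' (2 * n)).
  { split; [lia|]. split; [replace O with (2 * 0)%nat by lia; rewrite E1; auto|]. split; [rewrite E1; auto|].
    intros j Hj. destruct (Nat.Even_or_Odd j) as [[i ->]|[i ->]].
    - rewrite E1, E2. apply Hs. lia.
    - replace (2 * i + 1)%nat with (S (2 * i)) by lia. rewrite E2, E3. apply Hs. lia. }
  pose proof (inscribed_length_le t' (2 * n) Hp') as H. unfold inscribed_length in H.
  rewrite rsum_pairs in H. erewrite rsum_ext; [apply H|]. intros i Hi. cbv beta. rewrite E1, E2, E3. auto.
Qed.

Definition excess (t : nat -> R) (i : nat) (s : R) : R :=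
  dist2 (g (t i)) (g s) + dist2 (g s) (g (t (S i))) - dist2 (g (t i)) (g (t (S i))).

Lemma excess_ge0 (t : nat -> R) (i : nat) (s : R) : 0 <= excess t i s.
Proof. unfold excess. pose proof (dist2_triangle (g (t i)) (g s) (g (t (S i)))). lra. Qed.

Section NearPartition.
Variables (t : nat -> R) (n : nat) (eta : R).
Hypothesis Hp : is_partition t n.
Hypothesis Hnear : L - eta < inscribed_length g t n.

Lemma rsum_excess_le (s : nat -> R) :
  (forall i, (i < n)%nat -> t i <= s i <= t (S i)) -> rsum (fun i => excess t i (s i)) n <= eta.
Proof.
  intros Hs. pose proof (refined_length_le t n s Hp Hs). unfold excess.
  rewrite rsum_minus. unfold inscribed_length in Hnear. lra.
Qed.

Lemma excess_le (i : nat) (s : R) : (i < n)%nat -> t i <= s <= t (S i) -> excess t i s <= eta.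
Proof.
  intros Hi Hs.
  set (s' := fun j => if Nat.eq_dec j i then s else t j).
  assert (Hs' : forall j, (j < n)%nat -> t j <= s' j <= t (S j)).
  { intros j Hj. unfold s'. destruct (Nat.eq_dec j i) as [->|]; auto.
    pose proof (proj2 (proj2 (proj2 Hp)) j Hj). lra. }
  pose proof (rsum_excess_le s' Hs').
  pose proof (rsum_term_le (fun j => excess t j (s' j)) n i (fun j _ => excess_ge0 t j (s' j)) Hi).
  assert (Hsi : s' i = s) by (unfold s'; destruct (Nat.eq_dec i i); congruence).
  cbv beta in H0. rewrite Hsi in H0. lra.
Qed.

(* The suprema [e i] of the excess over the pieces still sum to at most [eta]:
   otherwise points nearly attaining every supremum would contradict [rsum_excess_le]. *)
Lemma uniform_excess_bound : 0 < eta ->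
  exists e : nat -> R, (forall i, 0 <= e i) /\ rsum e n <= eta /\
    forall i s, (i < n)%nat -> t i <= s <= t (S i) -> excess t i s <= e i.
Proof.
  intros He.
  set (E := fun i x => x = 0 \/ ((i < n)%nat /\ exists s, t i <= s <= t (S i) /\ x = excess t i s)).
  assert (Hb : forall i, is_upper_bound (E i) eta).
  { intros i x [->|[Hi [s [Hs ->]]]]; [lra|]. apply excess_le; auto. }
  set (e := fun i => proj1_sig (completeness (E i) (ex_intro _ eta (Hb i)) (ex_intro _ 0 (or_introl eq_refl)))).
  assert (He_lub : forall i, is_lub (E i) (e i)) by (intros; unfold e; destruct completeness; auto).
  exists e. split; [|split].
  - intros i. apply (proj1 (He_lub i)). left; auto.
  - apply Rnot_lt_le. intros Hgt.
    assert (Hn : 0 < INR n) by (apply lt_0_INR; destruct Hp; auto).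
    set (gam := (rsum e n - eta) / (2 * INR n)).
    assert (Hgam : 0 < gam) by (apply Rdiv_lt_0_compat; lra).
    assert (Hc : forall i, exists s, (i < n)%nat -> t i <= s <= t (S i) /\ e i - gam <= excess t i s).
    { intros i. destruct (Nat.lt_ge_cases i n) as [Hi|Hi]; [|exists 0; intros; lia].
      destruct (is_lub_approx (E i) (e i) (e i - gam) (He_lub i) ltac:(lra)) as [x [[->|[_ [s [Hs ->]]]] Hx]].
      - exists (t i). intros _. pose proof (proj2 (proj2 (proj2 Hp)) i Hi).
        pose proof (excess_ge0 t i (t i)). split; lra.
      - exists s. intros _. split; auto. lra. }
    set (sf := fun i => proj1_sig (constructive_indefinite_description _ (Hc i))).
    assert (Hsf : forall i, (i < n)%nat -> t i <= sf i <= t (S i) /\ e i - gam <= excess t i (sf i)).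
    { intros i Hi. unfold sf. destruct constructive_indefinite_description. simpl. auto. }
    pose proof (rsum_excess_le sf (fun i Hi => proj1 (Hsf i Hi))).
    pose proof (rsum_le (fun i => e i - gam) (fun i => excess t i (sf i)) n (fun i Hi => proj2 (Hsf i Hi))).
    rewrite rsum_minus, rsum_const in H0.
    assert (INR n * gam = (rsum e n - eta) / 2) by (unfold gam; field; lra).
    lra.
  - intros i s Hi Hs. apply (proj1 (He_lub i)). right. split; auto. exists s; auto.
Qed.

End NearPartition.
End CurveLength.

(** * Shadows of tubes around a segment *)

Definition near_segment (P Q : pt) (r t0 h : R) (y : pt) : Prop :=
  exists t z1 z2, t0 <= t <= t0 + h /\ z1 * z1 + z2 * z2 <= r * r /\
    y = (fst P + t * (fst Q - fst P) + z1, snd P + t * (snd Q - snd P) + z2).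

Definition line_offset (a : pt) (k : R) (x : pt) : R := snd x - snd a - k * (fst x - fst a).

(* [x] lies on the vertical segment joining some [y] near [PQ] to the line. *)
Definition shadow (a : pt) (k : R) (P Q : pt) (r t0 h : R) (x : pt) : Prop :=
  exists y, near_segment P Q r t0 h y /\ fst x = fst y /\
    Rmin 0 (line_offset a k y) <= line_offset a k x <= Rmax 0 (line_offset a k y).

(* Half the minor axis of the ellipse with foci at distance [l] and major axis [l + e]. *)
Definition excess_radius (l e : R) : R := sqrt (e * (2 * l + e)) / 2.

Lemma excess_radius_sqr (l e : R) : 0 <= l -> 0 <= e ->
  excess_radius l e * excess_radius l e = e * (2 * l + e) / 4.
Proof.
  intros Hl He. unfold excess_radius.
  rewrite <- (sqrt_sqrt (e * (2 * l + e))) at 3 by (apply Rmult_le_pos; lra). field.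
Qed.

Lemma weighted_point_identity (P Q y : pt) :
  let A := dist2 P y in let B := dist2 y Q in
  (B * (fst y - fst P) + A * (fst y - fst Q)) * (B * (fst y - fst P) + A * (fst y - fst Q))
  + (B * (snd y - snd P) + A * (snd y - snd Q)) * (B * (snd y - snd P) + A * (snd y - snd Q))
  = A * B * ((A + B) * (A + B) - dist2 P Q * dist2 P Q).
Proof.
  intros A B. pose proof (dist2_sqr P y) as HA. pose proof (dist2_sqr y Q) as HB. pose proof (dist2_sqr P Q) as Hl.
  fold A in HA. fold B in HB.
  set (dPy := (fst P - fst y) ^ 2 + (snd P - snd y) ^ 2) in HA.
  set (dyQ := (fst y - fst Q) ^ 2 + (snd y - snd Q) ^ 2) in HB.
  set (dPQ := (fst P - fst Q) ^ 2 + (snd P - snd Q) ^ 2) in Hl.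
  transitivity (B * B * dPy + A * A * dyQ + A * B * (dPy + dyQ - dPQ)); [unfold dPy, dyQ, dPQ; ring|].
  rewrite <- HA, <- HB, <- Hl. ring.
Qed.

(* The point of the segment dividing it in the ratio [|Py| : |yQ|] is close to [y]. *)
Lemma near_segment_of_excess (P Q y : pt) (e : R) : 0 <= e ->
  dist2 P y + dist2 y Q <= dist2 P Q + e ->
  near_segment P Q (excess_radius (dist2 P Q) e) 0 1 y.
Proof.
  intros He Hy. pose proof (weighted_point_identity P Q y) as Hid. cbv zeta in Hid.
  set (A := dist2 P y) in *. set (B := dist2 y Q) in *. set (l := dist2 P Q) in *. set (S := A + B).
  pose proof (dist2_triangle P y Q). pose proof (dist2_ge0 P y). pose proof (dist2_ge0 y Q).
  pose proof (dist2_ge0 P Q). fold A B l in H, H0, H1, H2.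
  assert (Hr := excess_radius_sqr l e H2 He).
  destruct (Req_dec S 0) as [HS|HS].
  - assert (HA0 : A = 0) by (unfold S in HS; lra).
    exists 0, (fst y - fst P), (snd y - snd P). repeat split; try lra.
    + rewrite Hr. pose proof (dist2_sqr P y). fold A in H3. rewrite HA0 in H3.
      assert (0 <= e * (2 * l + e)) by (apply Rmult_le_pos; lra). nra.
    + destruct y; simpl; f_equal; ring.
  - set (t := A / S). assert (HSpos : 0 < S) by (unfold S in *; lra).
    exists t, (fst y - fst P - t * (fst Q - fst P)), (snd y - snd P - t * (snd Q - snd P)).
    set (z1 := fst y - fst P - t * (fst Q - fst P)). set (z2 := snd y - snd P - t * (snd Q - snd P)).
    repeat split.
    + apply Rdiv_ge0; lra.
    + apply (Rmult_le_reg_r S); [lra|]. unfold t. field_simplify; [unfold S; lra | exact HS].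
    + replace (B * (fst y - fst P) + A * (fst y - fst Q)) with (S * z1) in Hid by (unfold z1, t, S; field; fold S; lra).
      replace (B * (snd y - snd P) + A * (snd y - snd Q)) with (S * z2) in Hid by (unfold z2, t, S; field; fold S; lra).
      assert (HSl : l * l <= S * S <= (l + e) * (l + e)) by (split; apply Rmult_le_compat; unfold S in *; lra).
      assert (HAB : 0 <= A * B <= S * S / 4)
        by (split; [apply Rmult_le_pos; lra | pose proof (Rle_0_sqr (A - B)); unfold Rsqr, S in *; lra]).
      rewrite Hr. apply (Rmult_le_reg_l (S * S)); [apply Rmult_lt_0_compat; lra|].
      replace (S * S * (z1 * z1 + z2 * z2)) with ((S * z1) * (S * z1) + (S * z2) * (S * z2)) by ring.
      fold S in Hid. rewrite Hid. apply Rle_trans with (S * S / 4 * (S * S - l * l)).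
      * apply Rmult_le_compat_r; lra.
      * replace (S * S * (e * (2 * l + e) / 4)) with (S * S / 4 * (e * (2 * l + e))) by field.
        apply Rmult_le_compat_l; nra.
    + destruct y; unfold z1, z2; simpl; f_equal; ring.
Qed.

Lemma near_segment_bounds (a : pt) (k : R) (P Q : pt) (r t0 h : R) (y : pt) :
  0 <= r -> 0 <= h -> near_segment P Q r t0 h y ->
  let DX := fst Q - fst P in let Do := line_offset a k Q - line_offset a k P in
  let x0 := fst P + t0 * DX in
  Rmin 0 (h * DX) - r <= fst y - x0 <= Rmax 0 (h * DX) + r /\
  Rabs (line_offset a k y - (line_offset a k P + t0 * Do)) <= Rabs Do * h + (1 + Rabs k) * r.
Proof.
  intros Hr Hh [t [z1 [z2 [Ht [Hz ->]]]]] DX Do x0.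
  pose proof (Rabs_le_of_sqr_le z1 r Hr ltac:(pose proof (Rle_0_sqr z2); unfold Rsqr in *; lra)) as Hz1.
  pose proof (Rabs_le_of_sqr_le z2 r Hr ltac:(pose proof (Rle_0_sqr z1); unfold Rsqr in *; lra)) as Hz2.
  split.
  - pose proof (Rabs_le_bounds z1 r Hz1).
    assert (Rmin 0 (h * DX) <= (t - t0) * DX <= Rmax 0 (h * DX))
      by (unfold Rmin, Rmax; destruct (Rle_dec 0 (h * DX)), (Rle_dec 0 DX); nra).
    unfold x0, DX in *; simpl. lra.
  - replace (line_offset a k _ - _) with ((t - t0) * Do + (z2 - k * z1)) by (unfold Do, line_offset; simpl; ring).
    eapply Rle_trans; [apply Rabs_triang|]. apply Rplus_le_compat.
    + rewrite Rabs_mult, (Rabs_pos_eq (t - t0)), Rmult_comm by lra.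
      apply Rmult_le_compat_l; [apply Rabs_pos | lra].
    + eapply Rle_trans; [apply Rabs_triang|]. rewrite Rabs_Ropp, Rabs_mult.
      pose proof (Rmult_le_compat_l (Rabs k) _ _ (Rabs_pos k) Hz1). lra.
Qed.

Lemma shadow_in_box (a : pt) (k : R) (P Q : pt) (r t0 h : R) : 0 <= r -> 0 <= h ->
  let DX := fst Q - fst P in let Do := line_offset a k Q - line_offset a k P in
  let c := line_offset a k P + t0 * Do in
  let om := Rabs DX * h + r in let sg := Rabs Do * h + (1 + Rabs k) * r in
  exists box, rect_wf box /\ (forall x, shadow a k P Q r t0 h x -> in_rect box x) /\
    rect_area box <= (Rabs DX * h + 2 * r) * (Rabs c + 2 * sg + 2 * Rabs k * om).
Proof.
  intros Hr Hh DX Do c om sg.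
  set (x0 := fst P + t0 * DX). set (base := snd a + k * (x0 - fst a)).
  exists (x0 + Rmin 0 (h * DX) - r, x0 + Rmax 0 (h * DX) + r,
          base + Rmin 0 (c - sg) - Rabs k * om, base + Rmax 0 (c + sg) + Rabs k * om).
  assert (Hk := Rabs_pos k). assert (HDo := Rabs_pos Do).
  assert (HhDX : Rabs (h * DX) = Rabs DX * h) by (rewrite Rabs_mult, (Rabs_pos_eq h Hh); ring).
  assert (Hom : 0 <= om) by (unfold om; rewrite <- HhDX; pose proof (Rabs_pos (h * DX)); lra).
  assert (Hsg : 0 <= sg) by (unfold sg; pose proof (Rmult_le_pos _ _ HDo Hh); nra).
  assert (Hkom : 0 <= Rabs k * om) by (apply Rmult_le_pos; lra).
  split; [|split].
  - simpl. unfold Rmin, Rmax.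
    destruct (Rle_dec 0 (h * DX)), (Rle_dec 0 (c - sg)), (Rle_dec 0 (c + sg)); lra.
  - intros [x1 x2] [y [Hy [Hx Ho]]]. simpl in Hx.
    destruct (near_segment_bounds a k P Q r t0 h y Hr Hh Hy) as [Hfst Hoff]. fold DX Do x0 c sg in Hfst, Hoff.
    assert (Hfx : Rabs (x1 - x0) <= om).
    { apply Rabs_le. unfold om. rewrite <- HhDX.
      unfold Rmin, Rmax, Rabs in *. destruct (Rle_dec 0 (h * DX)), (Rcase_abs (h * DX)); lra. }
    assert (Hkx : Rabs (k * (x1 - x0)) <= Rabs k * om)
      by (rewrite Rabs_mult; apply Rmult_le_compat_l; lra).
    apply Rabs_le_bounds in Hkx, Hoff.
    set (oy := line_offset a k y) in *. unfold line_offset in Ho; simpl in Ho.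
    simpl. split; [lra|].
    replace x2 with (base + k * (x1 - x0) + (x2 - snd a - k * (x1 - fst a))) by (unfold base; ring).
    unfold Rmin, Rmax in *.
    destruct (Rle_dec 0 oy), (Rle_dec 0 (c - sg)), (Rle_dec 0 (c + sg)); lra.
  - simpl. replace (x0 + Rmax 0 (h * DX) + r - (x0 + Rmin 0 (h * DX) - r)) with (Rabs DX * h + 2 * r).
    + apply Rmult_le_compat_l; [unfold om in Hom; lra|].
      unfold Rmin, Rmax, Rabs. destruct (Rcase_abs c), (Rle_dec 0 (c - sg)), (Rle_dec 0 (c + sg)); lra.
    + rewrite <- HhDX. unfold Rmin, Rmax, Rabs. destruct (Rle_dec 0 (h * DX)), (Rcase_abs (h * DX)); lra.
Qed.

Lemma uniform_partition (m : nat) : (0 < m)%nat -> is_partition (fun j => INR j / INR m) m.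
Proof.
  intros Hm. assert (HM : 0 < INR m) by (apply lt_0_INR; auto).
  repeat split; auto.
  - simpl. unfold Rdiv. ring.
  - field. lra.
  - intros i _. rewrite S_INR. apply Rmult_le_compat_r; [left; apply Rinv_0_lt_compat|]; lra.
Qed.

Lemma rsum_interpolate (A B : R) (m : nat) : (0 < m)%nat ->
  rsum (fun j => (1 - INR j / INR m) * A + INR j / INR m * B) m
  = A * (INR m + 1) / 2 + B * (INR m - 1) / 2.
Proof.
  intros Hm. assert (HM : 0 < INR m) by (apply lt_0_INR; auto).
  rewrite (rsum_ext _ (fun j => A + (B - A) / INR m * INR j)) by (intros; field; lra).
  rewrite rsum_plus, rsum_const, rsum_scal, rsum_INR. field. lra.
Qed.

Lemma strip_cost_le (w r H q oP oQ s : R) : 0 <= w -> 0 <= r -> 0 <= s <= 1 ->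
  Rabs oP <= H -> Rabs oQ <= H ->
  (w + 2 * r) * (Rabs (oP + s * (oQ - oP)) + q)
    <= w * ((1 - s) * Rabs oP + s * Rabs oQ) + 2 * r * H + (w + 2 * r) * q.
Proof.
  intros Hw Hr Hs HP HQ.
  assert (Hc1 : Rabs (oP + s * (oQ - oP)) <= (1 - s) * Rabs oP + s * Rabs oQ).
  { replace (oP + s * (oQ - oP)) with ((1 - s) * oP + s * oQ) by ring.
    eapply Rle_trans; [apply Rabs_triang|].
    rewrite !Rabs_mult, (Rabs_pos_eq (1 - s)), (Rabs_pos_eq s) by lra. lra. }
  assert (Hc2 : (1 - s) * Rabs oP + s * Rabs oQ <= H) by nra.
  nra.
Qed.

Lemma shadow_cover (a : pt) (k : R) (P Q : pt) (r H : R) (m : nat) : 0 <= r -> (0 < m)%nat ->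
  Rabs (line_offset a k P) <= H -> Rabs (line_offset a k Q) <= H ->
  let DX := fst Q - fst P in let Do := line_offset a k Q - line_offset a k P in
  let M := INR m in let om := Rabs DX / M + r in let sg := Rabs Do / M + (1 + Rabs k) * r in
  exists l, covers l (shadow a k P Q r 0 1) /\
    total_area l <= Rabs DX * (Rabs (line_offset a k P) + Rabs (line_offset a k Q)) / 2
      + Rabs DX * H / (2 * M) + 2 * r * M * H + (Rabs DX + 2 * r * M) * (2 * sg + 2 * Rabs k * om).
Proof.
  intros Hr Hm HP HQ DX Do M om sg.
  assert (HM : 1 <= M) by (unfold M; replace 1 with (INR 1) by reflexivity; apply le_INR; lia).
  set (oP := line_offset a k P) in *. set (oQ := line_offset a k Q) in *.
  set (q := 2 * sg + 2 * Rabs k * om).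
  (* the j-th strip is the part of the shadow with parameter in [j / M, (j + 1) / M] *)
  set (cj := fun j : nat => (Rabs DX / M + 2 * r) * (Rabs (oP + INR j / M * (oQ - oP)) + q)).
  destruct (covers_bigcup (fun j => shadow a k P Q r (INR j / M) (1 / M)) cj m) as [l [Hc Hs]].
  { intros j Hj.
    destruct (shadow_in_box a k P Q r (INR j / M) (1 / M) Hr ltac:(apply Rdiv_ge0; lra))
      as [box [Hwf [Hin Harea]]].
    exists (box :: nil). split; [apply covers_rect; auto|].
    cbn [total_area]. rewrite Rplus_0_r. eapply Rle_trans; [apply Harea|]. right.
    unfold cj, q, sg, om, Do, DX. fold oP oQ. unfold Rdiv. ring. }
  exists l. split.
  - eapply covers_sub; [apply Hc|]. intros x [y [[t [z1 [z2 [Ht Hy]]]] Hx]].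
    destruct (partition_interval _ m (uniform_partition m Hm) t ltac:(lra)) as [j [Hj Hjt]].
    exists j. split; auto. exists y. split; auto. exists t, z1, z2. split; auto.
    fold M in Hjt. rewrite S_INR in Hjt. split; [lra|]. replace (INR j / M + 1 / M) with ((INR j + 1) / M) by (field; lra). lra.
  - eapply Rle_trans; [apply Hs|].
    assert (Hcj : forall j, (j < m)%nat -> cj j <= Rabs DX / M * ((1 - INR j / M) * Rabs oP + INR j / M * Rabs oQ)
                                           + 2 * r * H + (Rabs DX / M + 2 * r) * q).
    { intros j Hj. apply strip_cost_le; auto; [apply Rdiv_ge0; [apply Rabs_pos | lra]|].
      split; [apply Rdiv_ge0; [apply pos_INR | lra]|].
      apply (Rmult_le_reg_r M); [lra|]. field_simplify; [|lra]. apply le_INR. lia. }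
    eapply Rle_trans; [apply (rsum_le _ _ m Hcj)|].
    rewrite !rsum_plus, rsum_scal, !rsum_const. fold M.
    pose proof (rsum_interpolate (Rabs oP) (Rabs oQ) m Hm) as Hint. fold M in Hint. rewrite Hint.
    assert (Rabs DX / M * (Rabs oP * (M + 1) / 2 + Rabs oQ * (M - 1) / 2)
            = Rabs DX * (Rabs oP + Rabs oQ) / 2 + Rabs DX * (Rabs oP - Rabs oQ) / (2 * M)) by (field; lra).
    assert (Rabs DX * (Rabs oP - Rabs oQ) / (2 * M) <= Rabs DX * H / (2 * M)).
    { apply Rmult_le_compat_r; [left; apply Rinv_0_lt_compat; lra|].
      apply Rmult_le_compat_l; [apply Rabs_pos|]. pose proof (Rabs_pos oQ). lra. }
    assert (M * ((Rabs DX / M + 2 * r) * q) = (Rabs DX + 2 * r * M) * q) by (field; lra).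
    lra.
Qed.

(** * A discrete area inequality *)

Lemma sqr_le_excess (du dv : R) :
  let l := sqrt (du ^ 2 + dv ^ 2) in Rabs du <= l /\ dv * dv <= 2 * l * (l - Rabs du).
Proof.
  intros l.
  assert (Hl2 : l * l = du * du + dv * dv)
    by (unfold l; rewrite sqrt_sqrt; [ring | pose proof (pow2_ge_0 du); pose proof (pow2_ge_0 dv); lra]).
  assert (Hl0 : 0 <= l) by apply sqrt_pos.
  assert (Hdu2 : Rabs du * Rabs du = du * du) by (rewrite <- Rabs_mult, Rabs_pos_eq; nra).
  assert (Hdu : Rabs du <= l) by (apply le_of_sqr_le; nra).
  split; [exact Hdu|]. pose proof (Rabs_pos du). nra.
Qed.

Lemma rsum_by_parts (l w : nat -> R) (n : nat) : w O = 0 -> w n = 0 ->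
  rsum (fun i => l i * (w i + w (S i)) / 2) n
  = rsum (fun i => (w (S i) - w i) * ((rsum l n - rsum l i - rsum l (S i)) / 2)) n.
Proof.
  intros Hw0 Hwn. apply Rminus_diag_uniq. rewrite <- rsum_minus.
  set (phi := fun i => w i * (2 * rsum l i - rsum l n) / 2).
  rewrite (rsum_ext _ (fun i => phi (S i) - phi i)), rsum_telescope.
  - unfold phi. rewrite Hw0, Hwn. unfold Rdiv. ring.
  - intros i _. unfold phi. cbn [rsum]. field.
Qed.

Lemma rsum_cubic_le (l : nat -> R) (n : nat) : (forall i, 0 <= l i) ->
  let c := fun i => (rsum l n - rsum l i - rsum l (S i)) / 2 in
  rsum (fun i => l i * c i * c i) n <= rsum l n * rsum l n * rsum l n / 12.
Proof.
  intros Hl c.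
  (* with [A i = Lam / 2 - rsum l i], the summand is at most [(A i ^ 3 - A (S i) ^ 3) / 3] *)
  set (A := fun i => rsum l n / 2 - rsum l i).
  assert (Hterm : forall i, l i * c i * c i <= (A i * A i * A i) / 3 - (A (S i) * A (S i) * A (S i)) / 3).
  { intros i. assert (HA : A (S i) = A i - l i) by (unfold A; cbn [rsum]; ring).
    assert (Hci : c i = (A i + A (S i)) / 2) by (unfold c, A; field).
    rewrite Hci, HA. pose proof (Hl i). assert (0 <= l i * l i * l i) by (pose proof (Rle_0_sqr (l i)); unfold Rsqr in *; nra).
    lra. }
  eapply Rle_trans; [apply (rsum_le _ _ n (fun i _ => Hterm i))|].
  set (F := fun j => - (A j * A j * A j) / 3).
  rewrite (rsum_ext _ (fun i => F (S i) - F i)) by (intros; unfold F; field).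
  rewrite rsum_telescope. unfold F, A. cbn [rsum]. right. field.
Qed.

Section DiscreteArea.
Variables (u v : nat -> R) (n : nat).
Hypotheses (Hv0 : v O = 0) (Hvn : v n = 0).

Let du i := u (S i) - u i.
Let dv i := v (S i) - v i.
Let l i := sqrt (du i ^ 2 + dv i ^ 2).
Let Lam := rsum l n.
Let X := Lam - rsum (fun i => Rabs (du i)) n.
Let x i := l i - Rabs (du i).

Lemma rsum_excess_eq : rsum x n = X.
Proof. unfold X, x. apply rsum_minus. Qed.

Lemma dv_sqr_le_excess (i : nat) : 0 <= x i /\ dv i * dv i <= 2 * l i * x i.
Proof. destruct (sqr_le_excess (du i) (dv i)) as [H1 H2]. unfold x, l. split; lra. Qed.

Lemma total_variation_le (mu : R) : 0 < mu -> rsum (fun i => Rabs (dv i)) n <= X / mu + mu * Lam / 2.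
Proof.
  intros Hmu. eapply Rle_trans.
  - apply (rsum_le _ (fun i => / mu * x i + mu / 2 * l i)). intros i _.
    replace (/ mu * x i + mu / 2 * l i) with (x i / mu + mu * l i / 2) by (field; lra).
    destruct (dv_sqr_le_excess i). apply le_amgm; auto; [apply sqrt_pos|].
    rewrite <- Rabs_mult, Rabs_pos_eq by nra. lra.
  - rewrite rsum_plus, !rsum_scal, rsum_excess_eq. right. unfold Lam. field. lra.
Qed.

Lemma Rabs_le_total_variation (i : nat) : (i <= n)%nat -> Rabs (v i) <= rsum (fun j => Rabs (dv j)) n.
Proof.
  intros Hi. replace (v i) with (v i - v O) by (rewrite Hv0; ring).
  rewrite <- (rsum_telescope v i). eapply Rle_trans; [apply Rabs_rsum_le|].
  apply rsum_le_mono; auto. intros; apply Rabs_pos.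
Qed.

(* Summation by parts turns the area into a sum of [(|v (S i)| - |v i|) * c i]; by AM-GM each term costs
   [x i / lam] plus a cubic term in the lengths. *)
Lemma rsum_axis_trapezoids_le (lam : R) : 0 < lam ->
  rsum (fun i => l i * (Rabs (v i) + Rabs (v (S i))) / 2) n <= X / lam + lam * (Lam * Lam * Lam) / 24.
Proof.
  intros Hlam. set (w := fun i => Rabs (v i)).
  set (c := fun i => (Lam - rsum l i - rsum l (S i)) / 2).
  assert (Hl0 : forall i, 0 <= l i) by (intros; apply sqrt_pos).
  change (rsum (fun i => l i * (w i + w (S i)) / 2) n <= X / lam + lam * (Lam * Lam * Lam) / 24).
  rewrite (rsum_by_parts l w n) by (unfold w; rewrite ?Hv0, ?Hvn; apply Rabs_R0). fold Lam c.
  assert (Hb : forall i, (w (S i) - w i) * c i <= / lam * x i + lam / 2 * (l i * c i * c i)).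
  { intros i. destruct (dv_sqr_le_excess i) as [Hx Hdv].
    replace (/ lam * x i + lam / 2 * (l i * c i * c i)) with (x i / lam + lam * (l i * c i * c i) / 2) by (field; lra).
    eapply Rle_trans; [apply Rle_abs|]. rewrite Rabs_mult.
    assert (Rabs (w (S i) - w i) <= Rabs (dv i)) by apply Rabs_triang_inv2.
    eapply Rle_trans; [apply Rmult_le_compat_r; [apply Rabs_pos | eassumption]|].
    rewrite <- Rabs_mult. pose proof (Rle_0_sqr (c i)). unfold Rsqr in *.
    apply le_amgm; auto; [pose proof (Hl0 i); nra|].
    rewrite <- Rabs_mult, Rabs_pos_eq by nra.
    replace (dv i * c i * (dv i * c i)) with ((dv i * dv i) * (c i * c i)) by ring.
    replace (2 * (l i * c i * c i) * x i) with ((2 * l i * x i) * (c i * c i)) by ring.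
    apply Rmult_le_compat_r; auto. }
  eapply Rle_trans; [apply (rsum_le _ _ n (fun i _ => Hb i))|].
  rewrite rsum_plus, !rsum_scal, rsum_excess_eq.
  pose proof (rsum_cubic_le l n Hl0). fold Lam c in H.
  assert (lam / 2 * rsum (fun i => l i * c i * c i) n <= lam / 2 * (Lam * Lam * Lam / 12))
    by (apply Rmult_le_compat_l; lra).
  replace (/ lam * X) with (X / lam) by (unfold Rdiv; ring).
  replace (lam * (Lam * Lam * Lam) / 24) with (lam / 2 * (Lam * Lam * Lam / 12)) by field. lra.
Qed.

(* The trapezoids measured along the slope [kap] exceed those along the u-axis by at most
   [|kap|] times the square of the total variation of [v]. *)
Lemma discrete_area_bound (lam mu kap : R) : 0 < lam -> 0 < mu ->
  rsum (fun i => Rabs (du i - kap * dv i) * (Rabs (v i) + Rabs (v (S i))) / 2) n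
    <= X / lam + lam * (Lam * Lam * Lam) / 24 + Rabs kap * ((X / mu + mu * Lam / 2) * (X / mu + mu * Lam / 2)).
Proof.
  intros Hlam Hmu.
  set (V := rsum (fun i => Rabs (dv i)) n).
  assert (HV : V <= X / mu + mu * Lam / 2) by apply (total_variation_le mu Hmu).
  assert (HV0 : 0 <= V) by (apply rsum_ge0; intros; apply Rabs_pos).
  assert (Hterm : forall i, (i < n)%nat ->
    Rabs (du i - kap * dv i) * (Rabs (v i) + Rabs (v (S i))) / 2
      <= l i * (Rabs (v i) + Rabs (v (S i))) / 2 + Rabs kap * (Rabs (dv i) * V)).
  { intros i Hi.
    assert (Rabs (du i - kap * dv i) <= l i + Rabs kap * Rabs (dv i)).
    { eapply Rle_trans; [apply Rabs_triang|]. rewrite Rabs_Ropp, Rabs_mult.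
      pose proof (proj1 (sqr_le_excess (du i) (dv i))). fold (l i) in H. lra. }
    pose proof (Rabs_pos (v i)). pose proof (Rabs_pos (v (S i))).
    pose proof (Rabs_le_total_variation i ltac:(lia)). pose proof (Rabs_le_total_variation (S i) ltac:(lia)). fold V in H2, H3.
    pose proof (Rmult_le_compat_r (Rabs (v i) + Rabs (v (S i))) _ _ ltac:(lra) H).
    assert (Rabs kap * Rabs (dv i) * (Rabs (v i) + Rabs (v (S i))) <= Rabs kap * Rabs (dv i) * (2 * V))
      by (apply Rmult_le_compat_l; [apply Rmult_le_pos; apply Rabs_pos | lra]).
    lra. }
  eapply Rle_trans; [apply (rsum_le _ _ n Hterm)|].
  rewrite rsum_plus, rsum_scal.
  rewrite (rsum_ext (fun i => Rabs (dv i) * V) (fun i => V * Rabs (dv i))), rsum_scal by (intros; ring). fold V.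
  pose proof (rsum_axis_trapezoids_le lam Hlam).
  assert (V * V <= (X / mu + mu * Lam / 2) * (X / mu + mu * Lam / 2)) by (apply Rmult_le_compat; lra).
  pose proof (Rmult_le_compat_l (Rabs kap) _ _ (Rabs_pos kap) H0). lra.
Qed.

End DiscreteArea.

(* The optimal choice [lam = c / (2 B)] in [X / lam + lam B] once [c] dominates [2 sqrt (X B)]. *)
Lemma amgm_choice (X B c : R) : 0 <= X -> 0 < B -> 0 < c -> 4 * X * B <= c * c ->
  X / (c / (2 * B)) + c / (2 * B) * B <= c.
Proof.
  intros HX HB Hc H. replace (X / (c / (2 * B)) + c / (2 * B) * B) with (2 * X * B / c + c / 2) by (field; lra).
  apply (Rmult_le_reg_r c); [lra|]. field_simplify; [|lra]. lra.
Qed.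

Lemma sqr_slack (A K eta : R) : 0 <= A -> 0 <= K -> 0 < eta ->
  exists h, 0 < h /\ K * ((A + h) * (A + h)) <= K * (A * A) + eta.
Proof.
  intros HA HK He. set (q := (K + 1) * (2 * A + 1)).
  assert (Hq : 0 < q) by (unfold q; apply Rmult_lt_0_compat; lra).
  exists (Rmin 1 (eta / q)).
  assert (Hh0 : 0 < Rmin 1 (eta / q)) by (apply Rmin_glb_lt; [lra | apply Rdiv_lt_0_compat; lra]).
  pose proof (Rmin_l 1 (eta / q)). pose proof (Rmin_r 1 (eta / q)).
  set (h := Rmin 1 (eta / q)) in *. split; auto.
  assert (h * q <= eta) by (apply (Rmult_le_compat_r q) in H0; [|lra]; unfold Rdiv in H0; rewrite Rmult_assoc, Rinv_l in H0; lra).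
  assert (H2 : 0 <= h * (2 * A + h) <= h * (2 * A + 1)) by (split; [apply Rmult_le_pos|apply Rmult_le_compat_l]; lra).
  assert (K * (h * (2 * A + h)) <= (K + 1) * (h * (2 * A + 1))) by (apply Rmult_le_compat; lra).
  replace (K * ((A + h) * (A + h))) with (K * (A * A) + K * (h * (2 * A + h))) by ring.
  unfold q in *. lra.
Qed.

Lemma discrete_area_le (u v : nat -> R) (n : nat) (kap d L eta : R) :
  v O = 0 -> v n = 0 -> 0 < d -> d <= L -> 0 < eta ->
  rsum (fun i => sqrt ((u (S i) - u i) ^ 2 + (v (S i) - v i) ^ 2)) n <= L ->
  d <= rsum (fun i => Rabs (u (S i) - u i)) n ->
  rsum (fun i => Rabs ((u (S i) - u i) - kap * (v (S i) - v i)) * (Rabs (v i) + Rabs (v (S i))) / 2) n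
    <= sqrt ((L - d) * (L * L * L) / 6) + 2 * Rabs kap * ((L - d) * L) + eta.
Proof.
  intros Hv0 Hvn Hd HdL He HLam Hdu.
  set (Lam := rsum (fun i => sqrt ((u (S i) - u i) ^ 2 + (v (S i) - v i) ^ 2)) n) in *.
  set (X := Lam - rsum (fun i => Rabs (u (S i) - u i)) n).
  set (del := L - d).
  assert (HX0 : 0 <= X).
  { unfold X, Lam. rewrite <- rsum_minus. apply rsum_ge0. intros i _.
    pose proof (proj1 (sqr_le_excess (u (S i) - u i) (v (S i) - v i))). lra. }
  assert (HXd : X <= del) by (unfold X, del; lra).
  assert (HLam0 : 0 <= Lam) by (unfold Lam; apply rsum_ge0; intros; apply sqrt_pos).
  assert (HL3 : 0 < L * L * L) by (apply Rmult_lt_0_compat; [apply Rmult_lt_0_compat|]; lra).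
  assert (Hcube : Lam * Lam * Lam <= L * L * L) by (apply Rmult_le_compat; try apply Rmult_le_compat; nra).
  set (s := sqrt (del * (L * L * L) / 6)). set (tau := sqrt (2 * del * L)).
  assert (Hs2 : s * s = del * (L * L * L) / 6) by (apply sqrt_sqrt; apply Rdiv_ge0; [apply Rmult_le_pos|]; lra).
  assert (Ht2 : tau * tau = 2 * del * L) by (apply sqrt_sqrt; apply Rmult_le_pos; [apply Rmult_le_pos|]; lra).
  assert (Hs0 : 0 <= s) by apply sqrt_pos. assert (Ht0 : 0 <= tau) by apply sqrt_pos.
  destruct (sqr_slack tau (Rabs kap) (eta / 2) Ht0 (Rabs_pos kap) ltac:(lra)) as [h [Hh Hslack]].
  set (lam := (s + eta / 2) / (2 * (L * L * L / 24))). set (mu := (tau + h) / (2 * (L / 2))).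
  assert (Hlam : 0 < lam) by (unfold lam; apply Rdiv_lt_0_compat; lra).
  assert (Hmu : 0 < mu) by (unfold mu; apply Rdiv_lt_0_compat; lra).
  pose proof (discrete_area_bound u v n Hv0 Hvn lam mu kap Hlam Hmu) as Hbound.
  cbv beta zeta in Hbound. fold Lam X in Hbound.
  assert (E1 : X / lam + lam * (Lam * Lam * Lam) / 24 <= s + eta / 2).
  { pose proof (amgm_choice X (L * L * L / 24) (s + eta / 2) HX0 ltac:(lra) ltac:(lra) ltac:(nra)).
    fold lam in H. assert (lam * (Lam * Lam * Lam) <= lam * (L * L * L)) by (apply Rmult_le_compat_l; lra).
    replace (lam * (L * L * L / 24)) with (lam * (L * L * L) / 24) in H by field. lra. }
  assert (E2 : 0 <= X / mu + mu * Lam / 2 <= tau + h).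
  { pose proof (amgm_choice X (L / 2) (tau + h) HX0 ltac:(lra) ltac:(lra) ltac:(nra)).
    fold mu in H. pose proof (Rdiv_ge0 X mu HX0 Hmu). pose proof (Rmult_le_pos mu Lam ltac:(lra) HLam0).
    assert (mu * Lam <= mu * L) by (apply Rmult_le_compat_l; lra).
    replace (mu * (L / 2)) with (mu * L / 2) in H by field. lra. }
  assert (E3 : Rabs kap * ((X / mu + mu * Lam / 2) * (X / mu + mu * Lam / 2)) <= Rabs kap * ((tau + h) * (tau + h)))
    by (apply Rmult_le_compat_l; [apply Rabs_pos | apply Rmult_le_compat; lra]).
  rewrite Ht2 in Hslack. lra.
Qed.

(** * The area bound for a non-vertical chord *)

Definition slope (a b : pt) : R := (snd b - snd a) / (fst b - fst a).

Lemma line_offset_segment (a b x : pt) : fst a <> fst b -> segment a b x ->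
  line_offset a (slope a b) x = 0.
Proof.
  intros Hab [t [Ht ->]]. unfold line_offset, slope; simpl. field. lra.
Qed.

(* Coordinates in the orthonormal frame at [a] with first axis along [b - a], where [d = |b - a|]. *)
Definition along (a b : pt) (d : R) (p : pt) : R :=
  ((fst p - fst a) * (fst b - fst a) + (snd p - snd a) * (snd b - snd a)) / d.
Definition across (a b : pt) (d : R) (p : pt) : R :=
  ((snd p - snd a) * (fst b - fst a) - (fst p - fst a) * (snd b - snd a)) / d.

Section Frame.
Variables (a b : pt) (d : R).
Hypotheses (Hd : 0 < d) (Hdd : d * d = (fst b - fst a) ^ 2 + (snd b - snd a) ^ 2).

Lemma dist2_frame (p q : pt) :
  sqrt ((along a b d q - along a b d p) ^ 2 + (across a b d q - across a b d p) ^ 2) = dist2 p q.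
Proof.
  unfold along, across, dist2. f_equal.
  apply (Rmult_eq_reg_r (d * d)); [|nra].
  transitivity (((fst p - fst q) ^ 2 + (snd p - snd q) ^ 2) * ((fst b - fst a) ^ 2 + (snd b - snd a) ^ 2));
    [field; lra | rewrite Hdd; ring].
Qed.

(* The vertical trapezoid between [pq] and the line [ab] has the area of the trapezoid
   between [pq] and the first axis of the frame, slanted along the slope of [ab]. *)
Lemma trapezoid_frame (p q : pt) : fst b - fst a <> 0 ->
  let k := slope a b in
  Rabs (fst q - fst p) * (Rabs (line_offset a k p) + Rabs (line_offset a k q)) / 2
  = Rabs ((along a b d q - along a b d p) - k * (across a b d q - across a b d p))
      * (Rabs (across a b d p) + Rabs (across a b d q)) / 2.
Proof.
  intros HD k. unfold along, across, line_offset, k, slope.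
  set (D1 := fst b - fst a) in *. set (D2 := snd b - snd a) in *.
  replace (((fst q - fst a) * D1 + (snd q - snd a) * D2) / d - ((fst p - fst a) * D1 + (snd p - snd a) * D2) / d -
     D2 / D1 * (((snd q - snd a) * D1 - (fst q - fst a) * D2) / d - ((snd p - snd a) * D1 - (fst p - fst a) * D2) / d))
    with ((fst q - fst p) * (d / D1)).
  2: { apply (Rmult_eq_reg_r (D1 * d)); [|apply Rmult_integral_contrapositive; split; lra].
       transitivity ((fst q - fst p) * (d * d)); [field; lra|]. rewrite Hdd. fold D1 D2. field. lra. }
  assert (Ho : forall x, snd x - snd a - D2 / D1 * (fst x - fst a)
                         = ((snd x - snd a) * D1 - (fst x - fst a) * D2) / d * (d / D1))
    by (intros; field; lra).
  rewrite !Ho, !Rabs_mult. field.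
Qed.
End Frame.

Lemma excess_radius_ge0 (l e : R) : 0 <= excess_radius l e.
Proof. apply Rdiv_ge0; [apply sqrt_pos | lra]. Qed.

Lemma excess_radius_le (l e nu : R) : 0 <= l -> 0 <= e -> 0 < nu ->
  excess_radius l e <= e / (2 * nu) + nu * (2 * l + e) / 8.
Proof.
  intros Hl He Hnu. unfold excess_radius.
  assert (Hr2 : sqrt (e * (2 * l + e)) * sqrt (e * (2 * l + e)) = e * (2 * l + e))
    by (apply sqrt_sqrt; apply Rmult_le_pos; lra).
  pose proof (le_amgm (sqrt (e * (2 * l + e))) e ((2 * l + e) / 2) nu He ltac:(lra) Hnu ltac:(lra)).
  replace (e / (2 * nu)) with (e / nu / 2) by (field; lra). lra.
Qed.

Lemma rsum_excess_radius_le (l e : nat -> R) (n : nat) (L nu : R) :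
  (forall i, 0 <= l i) -> (forall i, 0 <= e i) -> rsum l n <= L -> rsum e n <= nu * nu ->
  0 < nu <= 1 -> rsum (fun i => excess_radius (l i) (e i)) n <= nu * (L + 1).
Proof.
  intros Hl He HL Hes Hnu.
  eapply Rle_trans.
  - apply (rsum_le _ (fun i => / (2 * nu) * e i + nu / 4 * l i + nu / 8 * e i)). intros i _.
    pose proof (excess_radius_le (l i) (e i) nu (Hl i) (He i) ltac:(lra)).
    replace (e i / (2 * nu)) with (/ (2 * nu) * e i) in H by (unfold Rdiv; ring). lra.
  - rewrite !rsum_plus, !rsum_scal.
    assert (/ (2 * nu) * rsum e n <= / (2 * nu) * (nu * nu))
      by (apply Rmult_le_compat_l; [left; apply Rinv_0_lt_compat|]; lra).
    replace (/ (2 * nu) * (nu * nu)) with (nu / 2) in H by (field; lra).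
    assert (nu / 4 * rsum l n <= nu / 4 * L) by (apply Rmult_le_compat_l; lra).
    assert (nu / 8 * rsum e n <= nu / 8 * (nu * nu)) by (apply Rmult_le_compat_l; lra).
    assert (nu / 8 * (nu * nu) <= nu / 8) by (assert (nu * nu <= 1) by nra; nra).
    assert (0 <= nu * L) by (pose proof (rsum_ge0 l n (fun i _ => Hl i)); nra). lra.
Qed.

Lemma Rabs_line_offset_le (a : pt) (k : R) (p : pt) :
  Rabs (line_offset a k p) <= (1 + Rabs k) * dist2 p a.
Proof.
  unfold line_offset. eapply Rle_trans; [apply Rabs_triang|].
  rewrite Rabs_Ropp, Rabs_mult. pose proof (Rabs_fst_le_dist2 p a). pose proof (Rabs_snd_le_dist2 p a).
  pose proof (Rmult_le_compat_l (Rabs k) _ _ (Rabs_pos k) H). lra.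
Qed.

Lemma curve_near_polygon (g : R -> pt) (t : nat -> R) (n : nat) (e : nat -> R) (y : pt) :
  is_partition t n -> (forall i, 0 <= e i) ->
  (forall i s, (i < n)%nat -> t i <= s <= t (S i) -> excess g t i s <= e i) ->
  (exists s, 0 <= s <= 1 /\ y = g s) ->
  exists i, (i < n)%nat /\
    near_segment (g (t i)) (g (t (S i))) (excess_radius (dist2 (g (t i)) (g (t (S i)))) (e i)) 0 1 y.
Proof.
  intros Hp He Hex [s [Hs ->]].
  destruct (partition_interval t n Hp s Hs) as [i [Hi Hsi]]. exists i. split; auto.
  apply near_segment_of_excess; auto. pose proof (Hex i s Hi Hsi). unfold excess in H. lra.
Qed.

(* Every point of [Om] is seen from the curve: go vertically away from the line [ab];
   the exit point is on the boundary but not on the segment, hence on the curve. *)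
Lemma shadows_cover_domain (a b : pt) (Om : pt -> Prop) (g : R -> pt) (t : nat -> R) (n : nat)
  (e : nat -> R) : fst a <> fst b -> Defs.open_set Om -> bounded_set Om -> is_partition t n ->
  (forall x, in_boundary Om x -> segment a b x \/ exists s, 0 <= s <= 1 /\ x = g s) ->
  (forall i, 0 <= e i) ->
  (forall i s, (i < n)%nat -> t i <= s <= t (S i) -> excess g t i s <= e i) ->
  forall x, Om x -> exists i, (i < n)%nat /\
    shadow a (slope a b) (g (t i)) (g (t (S i))) (excess_radius (dist2 (g (t i)) (g (t (S i)))) (e i)) 0 1 x.
Proof.
  intros Hab Hop Hbd Hp Hbdy He Hex x Hx.
  set (k := slope a b). set (o := line_offset a k x).
  set (sgn := if Rle_dec 0 o then 1 else -1).
  assert (Hsgn : sgn = 1 \/ sgn = -1) by (unfold sgn; destruct Rle_dec; auto).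
  destruct (vertical_ray_exit Om x sgn Hop Hbd Hx Hsgn) as [s [Hs Hb]].
  set (y := (fst x, snd x + sgn * s)) in Hb.
  assert (Hoy : line_offset a k y = o + sgn * s) by (unfold y, o, line_offset; simpl; ring).
  assert (Hside : 0 < (o + sgn * s) * sgn) by (unfold sgn in *; destruct Rle_dec; nra).
  destruct (Hbdy y Hb) as [Hseg | Hcurve].
  - exfalso. pose proof (line_offset_segment a b y Hab Hseg). fold k in H. nra.
  - destruct (curve_near_polygon g t n e y Hp He Hex Hcurve) as [i [Hi Hnear]].
    exists i. split; auto. exists y. split; [exact Hnear|]. split; [reflexivity|].
    rewrite Hoy. fold o. unfold Rmin, Rmax, sgn in *.
    destruct (Rle_dec 0 o), (Rle_dec 0 (o + _ * s)); lra.
Qed.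

Lemma cover_error_le (A B K r M l L : R) :
  0 <= A -> 0 <= B -> 0 <= K -> 0 <= r <= 1 -> 1 <= M -> A <= l -> l <= L -> B <= (1 + K) * l ->
  let G := 1 + K in let H := G * L in
  A * H / (2 * M) + 2 * r * M * H + (A + 2 * r * M) * (2 * (B / M + (1 + K) * r) + 2 * K * (A / M + r))
  <= 14 * G * (L + 1) * (l / M + r * M).
Proof.
  intros HA HB HK Hr HM HAl HlL HBl G H.
  set (iM := / M). assert (HiM : 0 < iM) by (apply Rinv_0_lt_compat; lra).
  assert (HG : 1 <= G) by (unfold G; lra).
  replace (A * H / (2 * M) + 2 * r * M * H + (A + 2 * r * M) * (2 * (B / M + (1 + K) * r) + 2 * K * (A / M + r)))
    with (iM * (A * H / 2 + 2 * A * B + 2 * K * A * A) + 2 * A * r * (1 + 2 * K) + 4 * r * B + 4 * r * K * A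
          + 4 * r * r * M * (1 + 2 * K) + 2 * r * M * H) by (unfold iM; field; lra).
  replace (14 * G * (L + 1) * (l / M + r * M)) with (iM * (14 * G * (L + 1) * l) + 14 * G * (L + 1) * (r * M))
    by (unfold iM; field; lra).
  assert (E1 : A * H / 2 + 2 * A * B + 2 * K * A * A <= 14 * G * (L + 1) * l).
  { assert (A * H <= l * (G * L)) by (apply Rmult_le_compat_r; unfold H; [apply Rmult_le_pos|]; lra).
    assert (A * B <= l * (G * l)) by (apply Rmult_le_compat; unfold G in *; lra).
    assert (K * (A * A) <= G * (l * l)) by (apply Rmult_le_compat; unfold G in *; nra).
    assert (l * l <= L * l) by (apply Rmult_le_compat_r; lra).
    assert (0 <= G * l) by (apply Rmult_le_pos; lra).
    unfold H in *. nra. }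
  apply (Rmult_le_compat_l iM) in E1; [|lra].
  set (w := r * M). assert (Hw : r <= w) by (unfold w; nra).
  assert (Hw0 : 0 <= w) by lra.
  assert (Arw : A * r <= L * w) by (apply Rmult_le_compat; lra).
  assert (F1 : A * r * (1 + 2 * K) <= L * w * (2 * G))
    by (apply Rmult_le_compat; [apply Rmult_le_pos | | |]; unfold G; lra).
  assert (F2 : r * B <= w * (G * L)).
  { apply Rmult_le_compat; try lra. apply (Rle_trans _ _ _ HBl).
    apply Rmult_le_compat_l; unfold G; lra. }
  assert (F3 : r * (K * A) <= w * (G * L))
    by (apply Rmult_le_compat; [lra | apply Rmult_le_pos | | apply Rmult_le_compat]; unfold G; lra).
  assert (F4 : r * r * M * (1 + 2 * K) <= w * (2 * G)).
  { apply Rmult_le_compat; [| | | unfold G; lra].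
    - apply Rmult_le_pos; [apply Rmult_le_pos|]; lra.
    - lra.
    - unfold w in *. rewrite Rmult_assoc. rewrite <- (Rmult_1_l (r * M)) at 2.
      apply Rmult_le_compat_r; lra. }
  assert (F5 : 0 <= G * w) by (apply Rmult_le_pos; lra).
  unfold H, w in *. lra.
Qed.

Lemma shadow_cover_le (a : pt) (k : R) (P Q : pt) (r L : R) (m : nat) :
  0 <= r <= 1 -> (0 < m)%nat -> dist2 P Q <= L -> dist2 P a <= L -> dist2 Q a <= L ->
  exists l, covers l (shadow a k P Q r 0 1) /\
    total_area l <= Rabs (fst Q - fst P) * (Rabs (line_offset a k P) + Rabs (line_offset a k Q)) / 2
                    + 14 * (1 + Rabs k) * (L + 1) * (dist2 P Q / INR m + r * INR m).
Proof.
  intros Hr Hm HPQ HPa HQa.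
  assert (HK := Rabs_pos k).
  assert (Hoff : forall p, dist2 p a <= L -> Rabs (line_offset a k p) <= (1 + Rabs k) * L).
  { intros p Hp. eapply Rle_trans; [apply Rabs_line_offset_le|]. apply Rmult_le_compat_l; lra. }
  destruct (shadow_cover a k P Q r ((1 + Rabs k) * L) m (proj1 Hr) Hm (Hoff P HPa) (Hoff Q HQa))
    as [l [Hcov Harea]].
  exists l. split; auto. eapply Rle_trans; [apply Harea|]. cbv zeta.
  assert (HA : Rabs (fst Q - fst P) <= dist2 P Q) by (rewrite dist2C; apply Rabs_fst_le_dist2).
  assert (HB : Rabs (line_offset a k Q - line_offset a k P) <= (1 + Rabs k) * dist2 P Q).
  { replace (line_offset a k Q - line_offset a k P) with ((snd Q - snd P) - k * (fst Q - fst P))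
      by (unfold line_offset; ring).
    eapply Rle_trans; [apply Rabs_triang|]. rewrite Rabs_Ropp, Rabs_mult.
    assert (Rabs (snd Q - snd P) <= dist2 P Q) by (rewrite dist2C; apply Rabs_snd_le_dist2).
    pose proof (Rmult_le_compat_l (Rabs k) _ _ HK HA). lra. }
  assert (HM : 1 <= INR m) by (replace 1 with (INR 1) by reflexivity; apply le_INR; lia).
  pose proof (cover_error_le _ _ _ r (INR m) (dist2 P Q) L (Rabs_pos _) (Rabs_pos _) HK Hr HM HA HPQ HB).
  cbv zeta in H. lra.
Qed.

Lemma rsum_trapezoids_le (a b : pt) (P : nat -> pt) (n : nat) (L eta : R) :
  fst a <> fst b -> P O = b -> P n = a -> 0 < eta ->
  dist2 a b <= L -> rsum (fun i => dist2 (P i) (P (S i))) n <= L ->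
  let k := slope a b in
  rsum (fun i => Rabs (fst (P (S i)) - fst (P i))
                   * (Rabs (line_offset a k (P i)) + Rabs (line_offset a k (P (S i)))) / 2) n
    <= sqrt ((L - dist2 a b) * (L * L * L) / 6) + 2 * Rabs k * ((L - dist2 a b) * L) + eta.
Proof.
  intros Hab HP0 HPn He HdL HLam k. set (d := dist2 a b) in *.
  assert (Hd : 0 < d).
  { pose proof (Rabs_fst_le_dist2 a b). pose proof (Rabs_pos_lt (fst a - fst b) ltac:(lra)). unfold d; lra. }
  assert (Hdd : d * d = (fst b - fst a) ^ 2 + (snd b - snd a) ^ 2) by (unfold d; rewrite dist2_sqr; ring).
  assert (HD : fst b - fst a <> 0) by lra.
  set (u := fun i => along a b d (P i)). set (v := fun i => across a b d (P i)).
  assert (Hv0 : v O = 0) by (unfold v, across; rewrite HP0; field; lra).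
  assert (Hvn : v n = 0) by (unfold v, across; rewrite HPn; field; lra).
  assert (Hu : d <= rsum (fun i => Rabs (u (S i) - u i)) n).
  { eapply Rle_trans; [|apply Rabs_rsum_le]. rewrite (rsum_telescope u n).
    unfold u, along. rewrite HP0, HPn.
    replace (((fst a - fst a) * (fst b - fst a) + (snd a - snd a) * (snd b - snd a)) / d
             - ((fst b - fst a) * (fst b - fst a) + (snd b - snd a) * (snd b - snd a)) / d) with (- d)
      by (replace ((fst b - fst a) * (fst b - fst a) + (snd b - snd a) * (snd b - snd a)) with (d * d)
            by (rewrite Hdd; ring); field; lra).
    rewrite Rabs_Ropp, Rabs_pos_eq; lra. }
  rewrite (rsum_ext _ (fun i => Rabs ((u (S i) - u i) - k * (v (S i) - v i)) * (Rabs (v i) + Rabs (v (S i))) / 2))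
    by (intros; apply (trapezoid_frame a b d Hd Hdd); auto).
  apply discrete_area_le; auto.
  rewrite (rsum_ext _ (fun i => dist2 (P i) (P (S i)))); auto.
  intros; apply (dist2_frame a b d Hd Hdd).
Qed.

Lemma small_cover_params (C L eta : R) : 0 < C -> 0 <= L -> 0 < eta ->
  exists (m : nat) (nu : R), (0 < m)%nat /\ 0 < nu /\ nu * (L + 1) <= 1 /\
    C * (L / INR m + INR m * (nu * (L + 1))) <= eta.
Proof.
  intros HC HL He.
  destruct (archimed_cor1 (eta / (2 * C * (L + 1)))) as [m [Hm Hm0]].
  { apply Rdiv_lt_0_compat; [|apply Rmult_lt_0_compat]; lra. }
  assert (HM : 0 < INR m) by (apply lt_0_INR; auto).
  set (M := INR m) in *.
  set (nu := Rmin (1 / (L + 1)) (eta / (2 * C * M * (L + 1)))).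
  assert (Hnu0 : 0 < nu)
    by (apply Rmin_glb_lt; apply Rdiv_lt_0_compat; try apply Rmult_lt_0_compat; try apply Rmult_lt_0_compat; lra).
  assert (Hnu1 : nu * (L + 1) <= 1).
  { pose proof (Rmin_l (1 / (L + 1)) (eta / (2 * C * M * (L + 1)))).
    apply (Rmult_le_compat_r (L + 1)) in H; [|lra]. fold nu in H. replace (1 / (L + 1) * (L + 1)) with 1 in H by (field; lra). lra. }
  assert (Hnu2 : C * (M * (nu * (L + 1))) <= eta / 2).
  { pose proof (Rmin_r (1 / (L + 1)) (eta / (2 * C * M * (L + 1)))). fold nu in H.
    apply (Rmult_le_compat_r (2 * C * M * (L + 1))) in H; [|apply Rmult_le_pos; [apply Rmult_le_pos|]; nra].
    replace (eta / (2 * C * M * (L + 1)) * (2 * C * M * (L + 1))) with eta in H by (field; repeat split; lra). lra. }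
  assert (HLM : C * (L / M) <= eta / 2).
  { apply (Rmult_lt_compat_l (2 * C * (L + 1))) in Hm; [|nra].
    replace (2 * C * (L + 1) * (eta / (2 * C * (L + 1)))) with eta in Hm by (field; lra).
    assert (C * (L / M) <= C * ((L + 1) / M)) by (apply Rmult_le_compat_l; [lra|]; apply Rmult_le_compat_r; [left; apply Rinv_0_lt_compat|]; lra).
    replace (C * ((L + 1) / M)) with (2 * C * (L + 1) * / M / 2) in H by (field; lra). lra. }
  exists m, nu. repeat split; auto. fold M. lra.
Qed.

Lemma rsum_cover_error_le (l r : nat -> R) (n : nat) (C M L R0 : R) : 0 <= C -> 0 < M ->
  rsum l n <= L -> rsum r n <= R0 ->
  rsum (fun i => C * (l i / M + r i * M)) n <= C * (L / M + M * R0).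
Proof.
  intros HC HM HL HR. rewrite rsum_scal, rsum_plus.
  rewrite (rsum_ext (fun i => l i / M) (fun i => / M * l i)) by (intros; unfold Rdiv; ring).
  rewrite (rsum_ext (fun i => r i * M) (fun i => M * r i)) by (intros; ring).
  rewrite !rsum_scal. apply Rmult_le_compat_l; auto.
  assert (/ M * rsum l n <= L / M)
    by (unfold Rdiv; rewrite Rmult_comm; apply Rmult_le_compat_r; [left; apply Rinv_0_lt_compat|]; lra).
  assert (M * rsum r n <= M * R0) by (apply Rmult_le_compat_l; lra). lra.
Qed.

Lemma area_le_curve_excess (a b : pt) (Om : pt -> Prop) (g : R -> pt) (L : R) :
  fst a <> fst b -> Defs.open_set Om -> bounded_set Om -> g 0 = b -> g 1 = a -> curve_length g L ->
  (forall x, in_boundary Om x -> segment a b x \/ exists s, 0 <= s <= 1 /\ x = g s) ->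
  area_le Om (sqrt ((L - dist2 a b) * (L * L * L) / 6) + 2 * Rabs (slope a b) * ((L - dist2 a b) * L)).
Proof.
  intros Hab Hop Hbd Hg0 Hg1 HL Hbdy.
  apply area_le_of_covers. intros eta He.
  set (k := slope a b). set (C := 14 * (1 + Rabs k) * (L + 1)).
  assert (HdL : dist2 a b <= L) by (rewrite dist2C, <- Hg0, <- Hg1; apply (dist2_ends_le g L HL)).
  assert (HL0 : 0 <= L) by (pose proof (dist2_ge0 a b); lra).
  assert (HC : 0 < C) by (unfold C; pose proof (Rabs_pos k); apply Rmult_lt_0_compat; [|]; lra).
  destruct (small_cover_params C L (eta / 2) HC HL0 ltac:(lra)) as [m [nu [Hm [Hnu0 [Hnu1 Hsmall]]]]].
  assert (Hnu : 0 < nu <= 1) by nra.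
  destruct (inscribed_length_near g L HL (nu * nu) ltac:(nra)) as [t [n [Hp Hnear]]].
  destruct (uniform_excess_bound g L HL t n (nu * nu) Hp Hnear ltac:(nra)) as [e [He0 [Hes Hex]]].
  set (P := fun i => g (t i)). set (l := fun i => dist2 (P i) (P (S i))).
  set (r := fun i => excess_radius (l i) (e i)).
  assert (Hl0 : forall i, 0 <= l i) by (intros; apply dist2_ge0).
  assert (HLam : rsum l n <= L) by apply (inscribed_length_le g L HL t n Hp).
  assert (Hrsum : rsum r n <= nu * (L + 1)) by (apply rsum_excess_radius_le; auto).
  assert (Hr : forall i, (i < n)%nat -> 0 <= r i <= 1).
  { intros i Hi. pose proof (rsum_term_le r n i (fun j _ => excess_radius_ge0 _ _) Hi).
    pose proof (excess_radius_ge0 (l i) (e i)). unfold r in *. lra. }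
  assert (HPa : forall i, (i <= n)%nat -> dist2 (P i) a <= L)
    by (intros; rewrite <- Hg1; apply (dist2_to_end_le g L HL), (partition_range t n Hp); auto).
  set (trap := fun i => Rabs (fst (P (S i)) - fst (P i))
                         * (Rabs (line_offset a k (P i)) + Rabs (line_offset a k (P (S i)))) / 2).
  destruct (covers_bigcup (fun i => shadow a k (P i) (P (S i)) (r i) 0 1)
              (fun i => trap i + C * (l i / INR m + r i * INR m)) n) as [cover [Hcov Harea]].
  { intros i Hi. apply shadow_cover_le; auto.
    - change (l i <= L). apply (rsum_term_le l n i (fun j _ => Hl0 j)) in Hi. lra.
    - apply HPa. lia. }
  exists cover. split.
  - eapply covers_sub; [exact Hcov|]. apply (shadows_cover_domain a b Om g t n e); auto.
  - eapply Rle_trans; [exact Harea|]. rewrite rsum_plus.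
    assert (Htrap : rsum trap n <= sqrt ((L - dist2 a b) * (L * L * L) / 6)
                                   + 2 * Rabs k * ((L - dist2 a b) * L) + eta / 2).
    { destruct Hp as [Hn [Ht0 [Htn _]]].
      apply rsum_trapezoids_le; auto; [unfold P; rewrite Ht0; auto | unfold P; rewrite Htn; auto | lra]. }
    assert (Herr : rsum (fun i => C * (l i / INR m + r i * INR m)) n <= eta / 2).
    { eapply Rle_trans; [|exact Hsmall].
      apply rsum_cover_error_le; [lra | apply lt_0_INR; auto | auto | auto]. }
    lra.
Qed.

Lemma Rpower_sqrt_form (e0 d del : R) : 0 < d -> 0 <= del ->
  (1 + e0) / sqrt 6 * Rpower d (3 / 2) * sqrt del = (1 + e0) * sqrt (d * d * d * del / 6).
Proof.
  intros Hd Hdel.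
  replace (3 / 2) with (1 + / 2) by field. rewrite Rpower_plus, Rpower_1, Rpower_sqrt by lra.
  assert (H6 : 0 < sqrt 6) by (apply sqrt_lt_R0; lra).
  rewrite (sqrt_lem_1 (d * d * d * del / 6) (d * sqrt d * sqrt del / sqrt 6)).
  - field. lra.
  - apply Rdiv_ge0; [repeat apply Rmult_le_pos|]; lra.
  - apply Rdiv_ge0; [repeat apply Rmult_le_pos|]; try apply sqrt_pos; lra.
  - replace (d * sqrt d * sqrt del / sqrt 6 * (d * sqrt d * sqrt del / sqrt 6))
      with (d * d * (sqrt d * sqrt d) * (sqrt del * sqrt del) / (sqrt 6 * sqrt 6)) by (field; lra).
    rewrite !sqrt_sqrt by lra. reflexivity.
Qed.

Section Numerics.
Variables (e0 K d L : R).
Hypotheses (He0 : 0 < e0) (Hd : 0 < d) (HdL : d <= L).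
Let del := L - d.
Let Q := sqrt (d * d * d * del / 6).

Lemma Q_sqr : Q * Q = d * d * d * del / 6.
Proof. apply sqrt_sqrt. unfold del. apply Rdiv_ge0; [repeat apply Rmult_le_pos|]; lra. Qed.

Lemma main_term_le (x : R) : 0 <= x <= 1 -> 7 * x <= e0 -> L <= d * (1 + x) ->
  sqrt (del * (L * L * L) / 6) <= (1 + e0 / 2) * Q.
Proof.
  intros Hx Hxe HL. apply le_of_sqr_le; [apply Rmult_le_pos; [lra | apply sqrt_pos]|].
  rewrite sqrt_sqrt by (unfold del; apply Rdiv_ge0; [repeat apply Rmult_le_pos|]; lra).
  replace ((1 + e0 / 2) * Q * ((1 + e0 / 2) * Q)) with ((1 + e0 / 2) * (1 + e0 / 2) * (Q * Q)) by ring.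
  rewrite Q_sqr.
  assert (Hx3 : (1 + x) * (1 + x) * (1 + x) <= (1 + e0 / 2) * (1 + e0 / 2)) by nra.
  assert (HL3 : L * L * L <= d * d * d * ((1 + x) * (1 + x) * (1 + x))).
  { assert (0 <= L * L <= (d * (1 + x)) * (d * (1 + x))) by (split; [|apply Rmult_le_compat]; nra).
    replace (d * d * d * ((1 + x) * (1 + x) * (1 + x))) with ((d * (1 + x)) * (d * (1 + x)) * (d * (1 + x))) by ring.
    apply Rmult_le_compat; lra. }
  assert (Hdel : 0 <= del) by (unfold del; lra).
  assert (0 < d * d * d) by (repeat apply Rmult_lt_0_compat; lra).
  apply (Rmult_le_compat_l del) in HL3; [|lra].
  apply (Rmult_le_compat_l (del * (d * d * d))) in Hx3; [|nra].
  nra.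
Qed.

Lemma slope_term_le (ep : R) : 0 < ep <= 1 / 2 -> K * K * ep <= e0 * e0 / 768 -> del <= 2 * ep * d ->
  2 * K * (del * L) <= e0 / 2 * Q.
Proof.
  intros Hep HKep Hdel2. assert (Hdel : 0 <= del) by (unfold del; lra).
  assert (HL : L <= 2 * d) by (unfold del in *; nra).
  apply le_of_sqr_le; [apply Rmult_le_pos; [lra | apply sqrt_pos]|].
  replace (e0 / 2 * Q * (e0 / 2 * Q)) with (e0 * e0 / 4 * (Q * Q)) by field. rewrite Q_sqr.
  (* (2 K del L)^2 <= 16 K^2 del^2 d^2 <= 32 K^2 ep d^3 del *)
  assert (H1 : L * L <= 4 * (d * d)) by nra.
  assert (H2 : del * del <= del * (2 * ep * d)) by (apply Rmult_le_compat_l; lra).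
  assert (HKK : 0 <= K * K) by nra.
  assert (H3 : (K * K) * (del * del) * (L * L) <= (K * K) * (del * (2 * ep * d)) * (4 * (d * d)))
    by (apply Rmult_le_compat; [nra | nra | apply Rmult_le_compat_l | ]; lra).
  assert (H4 : 0 <= d * d * d * del) by (repeat apply Rmult_le_pos; lra).
  apply (Rmult_le_compat_r (d * d * d * del)) in HKep; [|lra].
  nra.
Qed.

End Numerics.

Definition eps1_of (e0 K : R) : R := Rmin (1 / 2) (Rmin (e0 / 14) (e0 * e0 / (768 * ((K + 1) * (K + 1))))).

Lemma eps1_of_spec (e0 K : R) : 0 < e0 -> 0 <= K ->
  let ep := eps1_of e0 K in 0 < ep <= 1 / 2 /\ 14 * ep <= e0 /\ K * K * ep <= e0 * e0 / 768.
Proof.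
  intros He0 HK ep.
  assert (HK1 : 0 < (K + 1) * (K + 1)) by nra.
  set (q := e0 * e0 / (768 * ((K + 1) * (K + 1)))).
  assert (Hq : 0 < q) by (apply Rdiv_lt_0_compat; nra).
  assert (Hep : 0 < ep <= 1 / 2 /\ ep <= e0 / 14 /\ ep <= q).
  { unfold ep, eps1_of. fold q.
    pose proof (Rmin_l (e0 / 14) q). pose proof (Rmin_r (e0 / 14) q).
    pose proof (Rmin_l (1 / 2) (Rmin (e0 / 14) q)). pose proof (Rmin_r (1 / 2) (Rmin (e0 / 14) q)).
    assert (0 < Rmin (1 / 2) (Rmin (e0 / 14) q)) by (repeat apply Rmin_glb_lt; lra). lra. }
  repeat split; try lra.
  assert (ep * (768 * ((K + 1) * (K + 1))) <= e0 * e0).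
  { destruct Hep as [_ [_ Hepq]]. apply (Rmult_le_compat_r (768 * ((K + 1) * (K + 1)))) in Hepq; [|lra].
    unfold q, Rdiv in Hepq. rewrite Rmult_assoc, Rinv_l in Hepq by lra. lra. }
  assert (K * K * ep <= (K + 1) * (K + 1) * ep) by (apply Rmult_le_compat_r; nra).
  lra.
Qed.

Lemma excess_bound_le (e0 K d L : R) : 0 < e0 -> 0 <= K -> 0 < d -> d <= L ->
  L - d <= 2 * eps1_of e0 K * d ->
  sqrt ((L - d) * (L * L * L) / 6) + 2 * K * ((L - d) * L)
    <= (1 + e0) / sqrt 6 * Rpower d (3 / 2) * sqrt (d + L - 2 * d).
Proof.
  intros He0 HK Hd HdL Hdel.
  destruct (eps1_of_spec e0 K He0 HK) as [Hep [Hep14 HepK]]. set (ep := eps1_of e0 K) in *.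
  replace (d + L - 2 * d) with (L - d) by ring.
  rewrite Rpower_sqrt_form by lra.
  pose proof (main_term_le e0 d L He0 Hd HdL (2 * ep) ltac:(lra) ltac:(lra) ltac:(lra)).
  pose proof (slope_term_le e0 K d L He0 Hd HdL ep Hep HepK Hdel). lra.
Qed.

(* The conclusion of the theorem under the weaker hypotheses actually used in its proof. *)
Definition deficit_area_bound (a b : pt) : Prop :=
  forall eps0, 0 < eps0 -> exists eps1, 0 < eps1 /\
    forall (Om : pt -> Prop) (g : R -> pt) (L : R),
      Defs.open_set Om -> bounded_set Om -> g 0 = b -> g 1 = a -> curve_length g L ->
      (forall x, in_boundary Om x -> segment a b x \/ exists t, 0 <= t <= 1 /\ x = g t) ->
      dist2 a b + L <= (1 + eps1) * (2 * dist2 a b) ->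
      area_le Om ((1 + eps0) / sqrt 6 * Rpower (dist2 a b) (3 / 2) * sqrt (dist2 a b + L - 2 * dist2 a b)).

Lemma deficit_area_bound_nonvertical (a b : pt) : fst a <> fst b -> deficit_area_bound a b.
Proof.
  intros Hab eps0 He0. exists (eps1_of eps0 (Rabs (slope a b))).
  split; [apply eps1_of_spec; auto; apply Rabs_pos|].
  intros Om g L Hop Hbd Hg0 Hg1 HL Hbdy Hper.
  eapply area_le_le; [apply (area_le_curve_excess a b Om g L); auto|].
  assert (Hd : 0 < dist2 a b).
  { pose proof (Rabs_fst_le_dist2 a b). pose proof (Rabs_pos_lt (fst a - fst b) ltac:(lra)). lra. }
  assert (HdL : dist2 a b <= L) by (rewrite dist2C, <- Hg0, <- Hg1; apply (dist2_ends_le g L HL)).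
  apply excess_bound_le; auto; [apply Rabs_pos | lra].
Qed.

Definition swap (p : pt) : pt := (snd p, fst p).

Lemma swapK (p : pt) : swap (swap p) = p.
Proof. destruct p; reflexivity. Qed.

Lemma dist2_swap (p q : pt) : dist2 (swap p) (swap q) = dist2 p q.
Proof. unfold dist2, swap; simpl. f_equal. ring. Qed.

Lemma curve_length_swap (g : R -> pt) (L : R) : curve_length g L -> curve_length (fun s => swap (g s)) L.
Proof.
  intros [Hub Hlub]. assert (Heq : forall t n, poly_length (fun s => swap (g s)) t n = poly_length g t n).
  { intros. unfold poly_length. rewrite !sum_f_R0_rsum. apply rsum_ext. intros. apply dist2_swap. }
  split.
  - intros x [t [n [Hp ->]]]. rewrite Heq. apply Hub. exists t, n. auto.
  - intros M HM. apply Hlub. intros x [t [n [Hp ->]]]. rewrite <- Heq. apply HM. exists t, n. auto.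
Qed.

Lemma area_le_swap (Om : pt -> Prop) (M : R) : area_le (fun x => Om (swap x)) M -> area_le Om M.
Proof.
  intros H eta He. destruct (H eta He) as [rs [l [Hwf [Hcov [Hsum Hl]]]]].
  exists (fun k => let '(x1, x2, y1, y2) := rs k in (y1, y2, x1, x2)), l. split; [|split; [|split]].
  - intros k. specialize (Hwf k). destruct (rs k) as [[[x1 x2] y1] y2]. tauto.
  - intros p Hp. destruct (Hcov (swap p)) as [k Hk]; [rewrite swapK; auto|].
    exists k. destruct (rs k) as [[[x1 x2] y1] y2]. destruct p. simpl in *. tauto.
  - replace (fun k => rect_area (let '(x1, x2, y1, y2) := rs k in (y1, y2, x1, x2))) with (fun k => rect_area (rs k));
      [exact Hsum|].
    apply functional_extensionality. intros k. destruct (rs k) as [[[x1 x2] y1] y2]. simpl. ring.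
  - exact Hl.
Qed.

Lemma deficit_area_bound_swap (a b : pt) : deficit_area_bound (swap a) (swap b) -> deficit_area_bound a b.
Proof.
  intros Hsw eps0 He0. destruct (Hsw eps0 He0) as [eps1 [Hep Hbound]].
  exists eps1. split; auto. intros Om g L Hop [M HM] Hg0 Hg1 HL Hbdy Hper.
  apply area_le_swap. rewrite <- (dist2_swap a b).
  apply (Hbound _ (fun s => swap (g s))); try rewrite dist2_swap; auto.
  - intros x Hx. destruct (Hop _ Hx) as [r [Hr Hball]]. exists r. split; auto.
    intros y Hy. apply Hball. rewrite dist2_swap. auto.
  - exists M. intros x Hx. rewrite <- (dist2_swap x (0, 0)). auto.
  - simpl. rewrite Hg0. auto.
  - simpl. rewrite Hg1. auto.
  - apply curve_length_swap. auto.
  - intros x Hx.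
    assert (Hb : in_boundary Om (swap x)).
    { intros r Hr. destruct (Hx r Hr) as [[y1 [Hy1 Hy1']] [y2 [Hy2 Hy2']]]. split.
      - exists (swap y1). rewrite dist2_swap. auto.
      - exists (swap y2). rewrite dist2_swap. auto. }
    destruct (Hbdy _ Hb) as [[t [Ht Hs]]|[t [Ht Hs]]].
    + left. exists t. split; auto. rewrite <- (swapK x), Hs. reflexivity.
    + right. exists t. split; auto. rewrite <- (swapK x), Hs. reflexivity.
Qed.

Theorem lemma2 :
  forall a b : pt, a <> b ->
  forall eps0 : R, 0 < eps0 ->
  exists eps1 : R, 0 < eps1 /\
    forall (Omega : pt -> Prop) (g : R -> pt) (L : R),
      domain Omega -> bounded_set Omega -> simply_connected Omega ->
      continuous_path g -> g 0 = b -> g 1 = a ->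
      (forall s t, 0 <= s <= 1 -> 0 <= t <= 1 -> g s = g t -> s = t) ->
      (forall t, 0 < t < 1 -> ~ segment a b (g t)) ->
      curve_length g L ->
      (forall x, in_boundary Omega x <->
                 (segment a b x \/ exists t, 0 <= t <= 1 /\ x = g t)) ->
      dist2 a b + L <= (1 + eps1) * (2 * dist2 a b) ->
      area_le Omega
        ((1 + eps0) / sqrt 6 * Rpower (dist2 a b) (3 / 2)
           * sqrt (dist2 a b + L - 2 * dist2 a b)).
Proof.
  intros a b Hab eps0 He0.
  assert (Hbound : deficit_area_bound a b).
  { destruct (Req_dec (fst a) (fst b)) as [Heq|Hne].
    - apply deficit_area_bound_swap, deficit_area_bound_nonvertical.
      simpl. intros Hsnd. apply Hab. destruct a, b; simpl in *; congruence.
    - apply deficit_area_bound_nonvertical. exact Hne. }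
  destruct (Hbound eps0 He0) as [eps1 [Hep Hb]]. exists eps1. split; auto.
  intros Om g L [_ [Hop _]] Hbd _ _ Hg0 Hg1 _ _ HL Hbdy Hper.
  apply (Hb Om g L); auto. intros x Hx. apply Hbdy. exact Hx.
Qed.
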